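(* Let $\mathcal{A}\subset\mathbb{Z}^2$ be a finite set whose convex hull $\Delta_{\mathcal{A}}$ is a polygon, and let $f\colon\mathcal{A}\to\mathbb{R}^2$ be an assignment of control points. The following are equivalent: <ul> <li>for every choice of positive weights $w\in\mathbb{R}^{\mathcal{A}}_{>}$, the toric Bézier patch $F_w\colon\Delta_{\mathcal{A}}\to\mathbb{R}^2$ is injective on all of $\Delta_{\mathcal{A}}$;</li> <li>$f$ is compatible.</li> </ul>
   Context: Let $\mathcal{A}\subset\mathbb{Z}^2$ be finite and write $\Delta_{\mathcal{A}}$ for its convex hull, a lattice polygon. Write it via its edge inequalities as $\Delta_{\mathcal{A}}=\{x\in\mathbb{R}^2 : h_i(x)\ge 0,\ i=1,\dots,\ell\}$. Here there is one $h_i$ for each edge, and $h_i(x,y)=a_ix+b_iy+c_i$ with integers $a_i,b_i,c_i$ and $\gcd(a_i,b_i)=1$. For $\mathbf{a}\in\mathcal{A}$ the toric Bernstein polynomial is $\beta_{\mathbf{a}}(x)=\prod_{i=1}^{\ell} h_i(x)^{h_i(\mathbf{a})}$. Given control points $f\colon\mathcal{A}\to\mathbb{R}^d$ and weights $w=(w_{\mathbf{a}})\in\mathbb{R}^{\mathcal{A}}_{>}$ (all $w_{\mathbf{a}}>0$), the toric Bézier patch is $$F_w(x)=\frac{\sum_{\mathbf{a}\in\mathcal{A}} w_{\mathbf{a}} f(\mathbf{a})\beta_{\mathbf{a}}(x)}{\sum_{\mathbf{a}\in\mathcal{A}} w_{\mathbf{a}}\beta_{\mathbf{a}}(x)},\qquad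 x\in\Delta_{\mathcal{A}}.$$ An affinely independent triple $p_0,p_1,p_2\in\mathbb{R}^2$ has orientation given by the sign of $\det(p_1-p_0,\,p_2-p_0)$; it is positively oriented if this determinant is positive. An assignment $f\colon\mathcal{A}\to\mathbb{R}^2$ is weakly compatible if both of the following hold: <ol> <li>There exist affinely independent $\mathbf{a}_0,\mathbf{a}_1,\mathbf{a}_2\in\mathcal{A}$ such that $f(\mathbf{a}_0),f(\mathbf{a}_1),f(\mathbf{a}_2)$ are affinely independent.</li> <li>For any affinely independent $\mathbf{a}'_0,\mathbf{a}'_1,\mathbf{a}'_2\in\mathcal{A}$ with the same orientation as $\mathbf{a}_0,\mathbf{a}_1,\mathbf{a}_2$: if $f(\mathbf{a}'_0),f(\mathbf{a}'_1),f(\mathbf{a}'_2)$ are affinely independent, then they have the same orientation as $f(\mathbf{a}_0),f(\mathbf{a}_1),f(\mathbf{a}_2)$.</li> </ol> The assignment $f$ is compatible if it is weakly compatible and no two distinct vertices of $\Delta_{\mathcal{A}}$ have the same image under $f$. *)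

From Stdlib Require Import Reals ZArith List.
Open Scope R_scope.

Definition lpt := (Z * Z)%type.
Definition pt := (R * R)%type.

Definition lpt_eq_dec : forall a b : lpt, {a = b} + {a <> b}.
Proof. decide equality; apply Z.eq_dec. Defined.

Definition toR (a : lpt) : pt := (IZR (fst a), IZR (snd a)).

Fixpoint sumR {T : Type} (l : list T) (g : T -> R) : R :=
  match l with nil => 0 | x :: l' => g x + sumR l' g end.
Fixpoint prodR {T : Type} (l : list T) (g : T -> R) : R :=
  match l with nil => 1 | x :: l' => g x * prodR l' g end.

Definition in_hull (A : list lpt) (x : pt) : Prop :=
  exists lam : lpt -> R,
    (forall a, In a A -> 0 <= lam a) /\
    sumR A lam = 1 /\
    fst x = sumR A (fun a => lam a * IZR (fst a)) /\
    snd x = sumR A (fun a => lam a * IZR (snd a)).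

Definition aform := (Z * Z * Z)%type.
Definition hval (h : aform) (x : pt) : R :=
  let '((a, b), c) := h in IZR a * fst x + IZR b * snd x + IZR c.
Definition hvalZ (h : aform) (p : lpt) : Z :=
  let '((a, b), c) := h in (a * fst p + b * snd p + c)%Z.

Definition orient (p0 p1 p2 : pt) : R :=
  (fst p1 - fst p0) * (snd p2 - snd p0) - (snd p1 - snd p0) * (fst p2 - fst p0).

Definition is_polygon (A : list lpt) : Prop :=
  exists a0 a1 a2, In a0 A /\ In a1 A /\ In a2 A /\
    orient (toR a0) (toR a1) (toR a2) <> 0.

(* H is the list of edge inequalities of Delta_A: one primitive form per edge
   (no repetitions), each form vanishing on an edge (two distinct points of A),
   and Delta_A = { x | h_i(x) >= 0 for all i }. *)
Definition edge_data (A : list lpt) (H : list aform) : Prop :=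
  NoDup H /\
  (forall h, In h H -> let '((a, b), _) := h in Z.gcd a b = 1%Z) /\
  (forall h, In h H -> exists p q, In p A /\ In q A /\ p <> q /\
        hvalZ h p = 0%Z /\ hvalZ h q = 0%Z) /\
  (forall x : pt, in_hull A x <-> (forall h, In h H -> 0 <= hval h x)).

(* Toric Bernstein polynomial beta_a(x) = prod_i h_i(x)^{h_i(a)}
   (the exponents h_i(a) are >= 0 for a in A). *)
Definition beta (H : list aform) (a : lpt) (x : pt) : R :=
  prodR H (fun h => hval h x ^ Z.to_nat (hvalZ h a)).

Definition patch (A : list lpt) (H : list aform) (w : lpt -> R) (f : lpt -> pt)
    (x : pt) : pt :=
  let den := sumR A (fun a => w a * beta H a x) in
  (sumR A (fun a => w a * fst (f a) * beta H a x) / den,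
   sumR A (fun a => w a * snd (f a) * beta H a x) / den).

Definition pos_weights (A : list lpt) (w : lpt -> R) : Prop :=
  forall a, In a A -> 0 < w a.

Definition injective_on_hull (A : list lpt) (F : pt -> pt) : Prop :=
  forall x y, in_hull A x -> in_hull A y -> F x = F y -> x = y.

Definition weakly_compatible (A : list lpt) (f : lpt -> pt) : Prop :=
  exists a0 a1 a2, In a0 A /\ In a1 A /\ In a2 A /\
    orient (toR a0) (toR a1) (toR a2) <> 0 /\
    orient (f a0) (f a1) (f a2) <> 0 /\
    forall b0 b1 b2, In b0 A -> In b1 A -> In b2 A ->
      orient (toR a0) (toR a1) (toR a2) * orient (toR b0) (toR b1) (toR b2) > 0 ->
      orient (f b0) (f b1) (f b2) <> 0 ->
      orient (f a0) (f a1) (f a2) * orient (f b0) (f b1) (f b2) > 0.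

Definition is_vertex (A : list lpt) (v : lpt) : Prop :=
  In v A /\ ~ in_hull (remove lpt_eq_dec v A) (toR v).

Definition compatible (A : list lpt) (f : lpt -> pt) : Prop :=
  weakly_compatible A f /\
  forall v1 v2, is_vertex A v1 -> is_vertex A v2 -> v1 <> v2 -> f v1 <> f v2.

From Stdlib Require Import Reals ZArith List Lra Lia Psatz.
From Stdlib Require Import Classical ClassicalEpsilon.
Open Scope R_scope.

(* The key algebraic object is, for nonnegative coefficients D on A, the 3x3
   "moment matrix"  M_D = sum_a D(a) (f(a),1)^T (a,1).  By Cauchy-Binet,
     6 det M_D = sum_{a,b,c} D(a) D(b) D(c) orient(f a,f b,f c) orient(a,b,c),
   and weak compatibility says precisely that all these terms have one sign.

   If F_w(x) = F_w(y) with x <> y, the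
   difference of the normalised Bernstein weights at y and at x factors as
   D(a) g(a) with D >= 0 and g affine and nonzero; hence (g's coefficients)
   lie in the kernel of M_D, det M_D = 0, and every triangle of points with
   D > 0 is degenerate (in A or in its image).  A combinatorial argument on
   the faces of the polygon containing x and y then either makes every
   triangle degenerate or produces two vertices with the same image.

   Vertices are interpolated, so distinct
   vertices have distinct images.  If f were not weakly compatible, an
   intermediate value argument gives positive D with det M_D = 0; for a
   kernel vector (c1,c2,c3), a multiple of (c1,c2) is realised as the
   log-gradient of the Bernstein ratio between an interior point x0 and
   another point y0 (again by the IVT), and suitable weights then make
   F_w(x0) = F_w(y0). *)

Section Sums.
Context {T : Type}.

Lemma sumR_ext (l : list T) (g1 g2 : T -> R) :
  (forall a, In a l -> g1 a = g2 a) -> sumR l g1 = sumR l g2.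
Proof.
  induction l as [|x l IH]; simpl; intros Hg; auto.
  rewrite Hg by auto. rewrite IH; auto.
Qed.

Lemma sumR_plus (l : list T) (g1 g2 : T -> R) :
  sumR l (fun a => g1 a + g2 a) = sumR l g1 + sumR l g2.
Proof. induction l; simpl; lra. Qed.

Lemma sumR_minus (l : list T) (g1 g2 : T -> R) :
  sumR l (fun a => g1 a - g2 a) = sumR l g1 - sumR l g2.
Proof. induction l; simpl; lra. Qed.

Lemma sumR_scal (l : list T) (c : R) (g : T -> R) :
  sumR l (fun a => c * g a) = c * sumR l g.
Proof. induction l; simpl; [ring|rewrite IHl; ring]. Qed.

Lemma sumR_scal_r (l : list T) (c : R) (g : T -> R) :
  sumR l (fun a => g a * c) = sumR l g * c.
Proof. induction l; simpl; [ring|rewrite IHl; ring]. Qed.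

Lemma sumR_const0 (l : list T) : sumR l (fun _ => 0) = 0.
Proof. induction l; simpl; lra. Qed.

Lemma sumR_nonneg (l : list T) (g : T -> R) :
  (forall a, In a l -> 0 <= g a) -> 0 <= sumR l g.
Proof.
  induction l as [|x l IH]; simpl; intros Hg; [lra|].
  assert (0 <= g x) by auto. assert (0 <= sumR l g) by auto. lra.
Qed.

Lemma sumR_in_le (l : list T) (g : T -> R) (t : T) :
  (forall a, In a l -> 0 <= g a) -> In t l -> g t <= sumR l g.
Proof.
  induction l as [|x l IH]; simpl; intros Hg Ht; [tauto|].
  destruct Ht as [<-|Ht].
  - assert (0 <= sumR l g) by (apply sumR_nonneg; auto). lra.
  - assert (0 <= g x) by auto. assert (g t <= sumR l g) by auto. lra.
Qed.

Lemma sumR_pos (l : list T) (g : T -> R) (t : T) :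
  (forall a, In a l -> 0 <= g a) -> In t l -> 0 < g t -> 0 < sumR l g.
Proof. intros Hg Ht Hp. pose proof (sumR_in_le l g t Hg Ht). lra. Qed.

Lemma sumR_nonempty (l : list T) (g : T -> R) : sumR l g <> 0 -> exists a, In a l.
Proof. destruct l as [|a l]; simpl; [intro N; lra|exists a; left; auto]. Qed.

Lemma sumR_zero_nonneg (l : list T) (g : T -> R) :
  (forall a, In a l -> 0 <= g a) -> sumR l g = 0 -> forall a, In a l -> g a = 0.
Proof.
  intros Hg Hs a Ha. pose proof (sumR_in_le l g a Hg Ha). pose proof (Hg a Ha). lra.
Qed.

Lemma sumR_le (l : list T) (g1 g2 : T -> R) :
  (forall a, In a l -> g1 a <= g2 a) -> sumR l g1 <= sumR l g2.
Proof.
  induction l as [|x l IH]; simpl; intros Hg; [lra|].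
  assert (g1 x <= g2 x) by auto. assert (sumR l g1 <= sumR l g2) by auto. lra.
Qed.

Lemma sumR_abs (l : list T) (g : T -> R) :
  Rabs (sumR l g) <= sumR l (fun a => Rabs (g a)).
Proof.
  induction l as [|x l IH]; simpl.
  - rewrite Rabs_R0; lra.
  - eapply Rle_trans; [apply Rabs_triang|]. lra.
Qed.

Lemma sumR_swap {U : Type} (l : list T) (l' : list U) (F : T -> U -> R) :
  sumR l (fun a => sumR l' (fun b => F a b)) =
  sumR l' (fun b => sumR l (fun a => F a b)).
Proof.
  induction l as [|x l IH]; simpl.
  - induction l' as [|y l' IH']; simpl; auto. rewrite <- IH'. ring.
  - rewrite IH. clear IH. induction l' as [|y l' IH']; simpl; [ring|]. rewrite <- IH'. ring.
Qed.

Lemma sumR_single (l : list T) (g : T -> R) (t : T) :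
  NoDup l -> In t l -> (forall a, In a l -> a <> t -> g a = 0) -> sumR l g = g t.
Proof.
  induction l as [|x l IH]; simpl; intros Hnd Ht Hz; [tauto|].
  inversion Hnd; subst.
  destruct Ht as [<-|Ht].
  - rewrite (sumR_ext l g (fun _ => 0)).
    + rewrite sumR_const0; ring.
    + intros a Ha. apply Hz; auto. intro E; subst; contradiction.
  - rewrite IH; auto.
    rewrite Hz; [ring|auto|]. intro E; subst; contradiction.
Qed.

Lemma prodR_zero (l : list T) (g : T -> R) (t : T) :
  In t l -> g t = 0 -> prodR l g = 0.
Proof.
  induction l as [|x l IH]; simpl; intros Ht Hz; [tauto|].
  destruct Ht as [<-|Ht]; [rewrite Hz; ring|rewrite IH; auto; ring].
Qed.

Lemma prodR_pos (l : list T) (g : T -> R) :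
  (forall a, In a l -> 0 < g a) -> 0 < prodR l g.
Proof.
  induction l as [|x l IH]; simpl; intros Hg; [lra|].
  apply Rmult_lt_0_compat; auto.
Qed.

Lemma prodR_nonneg (l : list T) (g : T -> R) :
  (forall a, In a l -> 0 <= g a) -> 0 <= prodR l g.
Proof.
  induction l as [|x l IH]; simpl; intros Hg; [lra|].
  apply Rmult_le_pos; auto.
Qed.

Definition S3 (l : list T) (F : T -> T -> T -> R) : R :=
  sumR l (fun a => sumR l (fun b => sumR l (fun c => F a b c))).

Lemma S3_ext (l : list T) F G :
  (forall a b c, In a l -> In b l -> In c l -> F a b c = G a b c) -> S3 l F = S3 l G.
Proof.
  intros E; unfold S3. apply sumR_ext; intros; apply sumR_ext; intros; apply sumR_ext; intros; auto.
Qed.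

Lemma S3_plus (l : list T) F G : S3 l (fun a b c => F a b c + G a b c) = S3 l F + S3 l G.
Proof.
  unfold S3. rewrite <- sumR_plus. apply sumR_ext; intros.
  rewrite <- sumR_plus. apply sumR_ext; intros. apply sumR_plus.
Qed.

Lemma S3_scal (l : list T) k F : S3 l (fun a b c => k * F a b c) = k * S3 l F.
Proof.
  unfold S3. rewrite <- sumR_scal. apply sumR_ext; intros.
  rewrite <- sumR_scal. apply sumR_ext; intros. apply sumR_scal.
Qed.

Lemma S3_opp (l : list T) F : - S3 l F = S3 l (fun a b c => - F a b c).
Proof.
  replace (- S3 l F) with (-1 * S3 l F) by ring. rewrite <- S3_scal. apply S3_ext; intros; ring.
Qed.

Lemma S3_swap12 (l : list T) F : S3 l F = S3 l (fun a b c => F b a c).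
Proof. unfold S3. apply sumR_swap. Qed.

Lemma S3_swap23 (l : list T) F : S3 l F = S3 l (fun a b c => F a c b).
Proof. unfold S3. apply sumR_ext; intros. apply sumR_swap. Qed.

Lemma S3_zero_nonneg (l : list T) F :
  (forall a b c, In a l -> In b l -> In c l -> 0 <= F a b c) -> S3 l F = 0 ->
  forall a b c, In a l -> In b l -> In c l -> F a b c = 0.
Proof.
  intros Hn Hs a b c Ha Hb Hc. unfold S3 in Hs.
  assert (E1 := sumR_zero_nonneg l _ (fun a Ha => sumR_nonneg l _ (fun b Hb =>
      sumR_nonneg l _ (fun c Hc => Hn a b c Ha Hb Hc))) Hs a Ha). simpl in E1.
  assert (E2 := sumR_zero_nonneg l _ (fun b Hb =>
      sumR_nonneg l _ (fun c Hc => Hn a b c Ha Hb Hc)) E1 b Hb). simpl in E2.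
  exact (sumR_zero_nonneg l _ (fun c Hc => Hn a b c Ha Hb Hc) E2 c Hc).
Qed.

End Sums.

Definition det3 (a1 a2 a3 b1 b2 b3 c1 c2 c3 : R) : R :=
  a1 * (b2 * c3 - b3 * c2) - a2 * (b1 * c3 - b3 * c1) + a3 * (b1 * c2 - b2 * c1).

Section CauchyBinet.
Context {T : Type}.
Variable l : list T.

Lemma det3_row1_sum (X1 X2 X3 : T -> R) b1 b2 b3 c1 c2 c3 :
  det3 (sumR l X1) (sumR l X2) (sumR l X3) b1 b2 b3 c1 c2 c3 =
  sumR l (fun a => det3 (X1 a) (X2 a) (X3 a) b1 b2 b3 c1 c2 c3).
Proof. induction l as [|x l' IH]; simpl; unfold det3 in *; [ring|]. rewrite <- IH. ring. Qed.

Lemma det3_row2_sum (X1 X2 X3 : T -> R) a1 a2 a3 c1 c2 c3 :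
  det3 a1 a2 a3 (sumR l X1) (sumR l X2) (sumR l X3) c1 c2 c3 =
  sumR l (fun b => det3 a1 a2 a3 (X1 b) (X2 b) (X3 b) c1 c2 c3).
Proof. induction l as [|x l' IH]; simpl; unfold det3 in *; [ring|]. rewrite <- IH. ring. Qed.

Lemma det3_row3_sum (X1 X2 X3 : T -> R) a1 a2 a3 b1 b2 b3 :
  det3 a1 a2 a3 b1 b2 b3 (sumR l X1) (sumR l X2) (sumR l X3) =
  sumR l (fun c => det3 a1 a2 a3 b1 b2 b3 (X1 c) (X2 c) (X3 c)).
Proof. induction l as [|x l' IH]; simpl; unfold det3 in *; [ring|]. rewrite <- IH. ring. Qed.

Variables p1 p2 p3 q1 q2 q3 : T -> R.

Definition Mx (i j : nat) : R := sumR l (fun a =>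
  (match i with 1%nat => p1 a | 2%nat => p2 a | _ => p3 a end) *
  (match j with 1%nat => q1 a | 2%nat => q2 a | _ => q3 a end)).

Definition Gq a b c := det3 (q1 a) (q2 a) (q3 a) (q1 b) (q2 b) (q3 b) (q1 c) (q2 c) (q3 c).
Definition Gp a b c := det3 (p1 a) (p2 a) (p3 a) (p1 b) (p2 b) (p3 b) (p1 c) (p2 c) (p3 c).

(* Cauchy-Binet for a sum of rank-one 3x3 matrices (summing over ordered
   triples, hence the factor 3! = 6).  Expanding the determinant row by row
   gives sum p1(a) p2(b) p3(c) Gq(a,b,c); antisymmetrising over the six
   permutations of (a,b,c) turns the monomial into Gp(a,b,c). *)
Lemma cauchy_binet :
  6 * det3 (Mx 1 1) (Mx 1 2) (Mx 1 3) (Mx 2 1) (Mx 2 2) (Mx 2 3) (Mx 3 1) (Mx 3 2) (Mx 3 3)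
  = S3 l (fun a b c => Gp a b c * Gq a b c).
Proof.
  set (m := fun a b c => p1 a * p2 b * p3 c).
  set (T0 := S3 l (fun a b c => m a b c * Gq a b c)).
  assert (Expand : det3 (Mx 1 1) (Mx 1 2) (Mx 1 3) (Mx 2 1) (Mx 2 2) (Mx 2 3)
                        (Mx 3 1) (Mx 3 2) (Mx 3 3) = T0).
  { unfold Mx, T0, S3. rewrite det3_row1_sum. apply sumR_ext; intros a _.
    rewrite det3_row2_sum. apply sumR_ext; intros b _.
    rewrite det3_row3_sum. apply sumR_ext; intros c _.
    unfold m, Gq, det3. ring. }
  assert (Ga : forall a b c, Gq b a c = - Gq a b c) by (intros; unfold Gq, det3; ring).
  assert (Gb : forall a b c, Gq a c b = - Gq a b c) by (intros; unfold Gq, det3; ring).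
  assert (E2 : T0 = - S3 l (fun a b c => m b a c * Gq a b c)).
  { unfold T0. rewrite S3_swap12, S3_opp. apply S3_ext; intros. rewrite Ga. ring. }
  assert (E3 : T0 = - S3 l (fun a b c => m a c b * Gq a b c)).
  { unfold T0. rewrite S3_swap23, S3_opp. apply S3_ext; intros. rewrite Gb. ring. }
  assert (E4 : T0 = S3 l (fun a b c => m b c a * Gq a b c)).
  { rewrite E3, S3_swap12, S3_opp. apply S3_ext; intros. rewrite Ga. ring. }
  assert (E5 : T0 = S3 l (fun a b c => m c a b * Gq a b c)).
  { rewrite E2, S3_swap23, S3_opp. apply S3_ext; intros. rewrite Gb. ring. }
  assert (E6 : T0 = - S3 l (fun a b c => m c b a * Gq a b c)).
  { rewrite E4, S3_swap23, S3_opp. apply S3_ext; intros. rewrite Gb. ring. }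
  rewrite Expand.
  transitivity (T0 - S3 l (fun a b c => m b a c * Gq a b c)
     - S3 l (fun a b c => m a c b * Gq a b c) + S3 l (fun a b c => m b c a * Gq a b c)
     + S3 l (fun a b c => m c a b * Gq a b c) - S3 l (fun a b c => m c b a * Gq a b c)).
  { lra. }
  unfold T0, Rminus. rewrite !S3_opp, <- !S3_plus.
  apply S3_ext; intros. unfold m, Gp, det3. ring.
Qed.

End CauchyBinet.

Lemma kernel_det3_zero (a1 a2 a3 b1 b2 b3 c1 c2 c3 x1 x2 x3 : R) :
  a1*x1 + a2*x2 + a3*x3 = 0 -> b1*x1 + b2*x2 + b3*x3 = 0 -> c1*x1 + c2*x2 + c3*x3 = 0 ->
  (x1 <> 0 \/ x2 <> 0 \/ x3 <> 0) -> det3 a1 a2 a3 b1 b2 b3 c1 c2 c3 = 0.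
Proof.
  intros Ha Hb Hc Hx.
  assert (E1 : det3 a1 a2 a3 b1 b2 b3 c1 c2 c3 * x1 =
    (b2*c3 - b3*c2) * (a1*x1 + a2*x2 + a3*x3) - (a2*c3 - a3*c2) * (b1*x1 + b2*x2 + b3*x3)
    + (a2*b3 - a3*b2) * (c1*x1 + c2*x2 + c3*x3)) by (unfold det3; ring).
  assert (E2 : det3 a1 a2 a3 b1 b2 b3 c1 c2 c3 * x2 =
    -(b1*c3 - b3*c1) * (a1*x1 + a2*x2 + a3*x3) + (a1*c3 - a3*c1) * (b1*x1 + b2*x2 + b3*x3)
    - (a1*b3 - a3*b1) * (c1*x1 + c2*x2 + c3*x3)) by (unfold det3; ring).
  assert (E3 : det3 a1 a2 a3 b1 b2 b3 c1 c2 c3 * x3 =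
    (b1*c2 - b2*c1) * (a1*x1 + a2*x2 + a3*x3) - (a1*c2 - a2*c1) * (b1*x1 + b2*x2 + b3*x3)
    + (a1*b2 - a2*b1) * (c1*x1 + c2*x2 + c3*x3)) by (unfold det3; ring).
  rewrite Ha, Hb, Hc in *.
  destruct Hx as [N|[N|N]].
  - apply (Rmult_eq_reg_r x1); auto. rewrite E1. ring.
  - apply (Rmult_eq_reg_r x2); auto. rewrite E2. ring.
  - apply (Rmult_eq_reg_r x3); auto. rewrite E3. ring.
Qed.

(* If every row is a multiple of the nonzero vector u, then (-u3, 0, u1) or
   (0, u3, -u2) is a nonzero kernel vector. *)
Lemma parallel_rows_kernel u1 u2 u3 r11 r12 r13 r21 r22 r23 r31 r32 r33 :
  ~ (u1 = 0 /\ u2 = 0 /\ u3 = 0) ->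
  (forall r1 r2 r3, (r1, r2, r3) = (r11, r12, r13) \/ (r1, r2, r3) = (r21, r22, r23) \/
     (r1, r2, r3) = (r31, r32, r33) ->
     r2 * u3 - r3 * u2 = 0 /\ r3 * u1 - r1 * u3 = 0 /\ r1 * u2 - r2 * u1 = 0) ->
  exists c1 c2 c3, (c1 <> 0 \/ c2 <> 0 \/ c3 <> 0) /\
    r11 * c1 + r12 * c2 + r13 * c3 = 0 /\ r21 * c1 + r22 * c2 + r23 * c3 = 0 /\
    r31 * c1 + r32 * c2 + r33 * c3 = 0.
Proof.
  intros Nu Par.
  destruct (Par r11 r12 r13 (or_introl eq_refl)) as [P1 [P2 P3]].
  destruct (Par r21 r22 r23 (or_intror (or_introl eq_refl))) as [Q1 [Q2 Q3]].
  destruct (Par r31 r32 r33 (or_intror (or_intror eq_refl))) as [S1 [S2 S3]].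
  destruct (Req_dec u1 0) as [E1|E1].
  - destruct (Req_dec u2 0) as [E2|E2].
    + destruct (Req_dec u3 0) as [E3|E3]; [exfalso; apply Nu; auto|].
      exists 0, u3, (- u2). repeat split; [right; left; auto| |nra|nra]; nra.
    + exists 0, u3, (- u2). repeat split; [right; right; lra| | |]; nra.
  - exists (- u3), 0, u1. repeat split; [right; right; auto| | |]; nra.
Qed.

(* A singular 3x3 matrix has a nonzero kernel vector: a nonzero cross
   product of two rows works, otherwise all rows are parallel. *)
Lemma det3_zero_kernel r11 r12 r13 r21 r22 r23 r31 r32 r33 :
  det3 r11 r12 r13 r21 r22 r23 r31 r32 r33 = 0 ->
  exists c1 c2 c3, (c1 <> 0 \/ c2 <> 0 \/ c3 <> 0) /\
    r11 * c1 + r12 * c2 + r13 * c3 = 0 /\ r21 * c1 + r22 * c2 + r23 * c3 = 0 /\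
    r31 * c1 + r32 * c2 + r33 * c3 = 0.
Proof.
  intros Hd. unfold det3 in Hd.
  destruct (classic (r12 * r23 - r13 * r22 = 0 /\ r13 * r21 - r11 * r23 = 0 /\
                     r11 * r22 - r12 * r21 = 0)) as [[A1 [A2 A3]]|N12].
  2:{ exists (r12 * r23 - r13 * r22), (r13 * r21 - r11 * r23), (r11 * r22 - r12 * r21).
      split; [|repeat split; [ring|ring|lra]].
      apply NNPP; intro N. apply N12. repeat split; apply NNPP; intro N'; apply N; auto. }
  destruct (classic (r12 * r33 - r13 * r32 = 0 /\ r13 * r31 - r11 * r33 = 0 /\
                     r11 * r32 - r12 * r31 = 0)) as [[B1 [B2 B3]]|N13].
  2:{ exists (r12 * r33 - r13 * r32), (r13 * r31 - r11 * r33), (r11 * r32 - r12 * r31).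
      split; [|repeat split; [ring|lra|ring]].
      apply NNPP; intro N. apply N13. repeat split; apply NNPP; intro N'; apply N; auto. }
  destruct (classic (r22 * r33 - r23 * r32 = 0 /\ r23 * r31 - r21 * r33 = 0 /\
                     r21 * r32 - r22 * r31 = 0)) as [[C1 [C2 C3]]|N23].
  2:{ exists (r22 * r33 - r23 * r32), (r23 * r31 - r21 * r33), (r21 * r32 - r22 * r31).
      split; [|repeat split; [lra|ring|ring]].
      apply NNPP; intro N. apply N23. repeat split; apply NNPP; intro N'; apply N; auto. }
  destruct (classic (r11 = 0 /\ r12 = 0 /\ r13 = 0)) as [Z1|N1].
  2:{ apply (parallel_rows_kernel r11 r12 r13); auto.
      intros r1 r2 r3 [E|[E|E]]; injection E as -> -> ->; repeat split; lra. }
  destruct Z1 as [-> [-> ->]].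
  destruct (classic (r21 = 0 /\ r22 = 0 /\ r23 = 0)) as [Z2|N2].
  2:{ apply (parallel_rows_kernel r21 r22 r23); auto.
      intros r1 r2 r3 [E|[E|E]]; injection E as -> -> ->; repeat split; lra. }
  destruct Z2 as [-> [-> ->]].
  destruct (classic (r31 = 0 /\ r32 = 0 /\ r33 = 0)) as [Z3|N3].
  2:{ apply (parallel_rows_kernel r31 r32 r33); auto.
      intros r1 r2 r3 [E|[E|E]]; injection E as -> -> ->; repeat split; lra. }
  destruct Z3 as [-> [-> ->]].
  exists 1, 0, 0. repeat split; lra.
Qed.

Lemma det3_affine_continuous (a11 a12 a13 a21 a22 a23 a31 a32 a33
                              b11 b12 b13 b21 b22 b23 b31 b32 b33 : R) :
  continuity (fun e => det3 (e * a11 + b11) (e * a12 + b12) (e * a13 + b13)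
                            (e * a21 + b21) (e * a22 + b22) (e * a23 + b23)
                            (e * a31 + b31) (e * a32 + b32) (e * a33 + b33)).
Proof. unfold det3. reg. Qed.

Definition nx (h : aform) : R := let '((a, b), c) := h in IZR a.
Definition ny (h : aform) : R := let '((a, b), c) := h in IZR b.
Definition cz (h : aform) : R := let '((a, b), c) := h in IZR c.

Lemma hval_eq h p : hval h p = nx h * fst p + ny h * snd p + cz h.
Proof. destruct h as [[a b] c]; reflexivity. Qed.

Lemma hval_toR h a : hval h (toR a) = IZR (hvalZ h a).
Proof.
  destruct h as [[x y] c]; destruct a as [p q]; simpl.
  rewrite plus_IZR, plus_IZR, !mult_IZR. reflexivity.
Qed.

Lemma toR_inj a b : toR a = toR b -> a = b.
Proof.
  destruct a as [a1 a2], b as [b1 b2]; unfold toR; simpl; intros E.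
  inversion E as [[E1 E2]]. apply eq_IZR in E1. apply eq_IZR in E2. subst; auto.
Qed.

Lemma orient_swap p0 p1 p2 : orient p1 p0 p2 = - orient p0 p1 p2.
Proof. unfold orient; ring. Qed.

(* Expansion of c - p in the frame (q - p, r - p). *)
Lemma orient_vec1 p q r c : orient p q r * (fst c - fst p) =
  orient p c r * (fst q - fst p) + orient p q c * (fst r - fst p).
Proof. unfold orient; ring. Qed.
Lemma orient_vec2 p q r c : orient p q r * (snd c - snd p) =
  orient p c r * (snd q - snd p) + orient p q c * (snd r - snd p).
Proof. unfold orient; ring. Qed.

Lemma scal_vec_zero (k : R) (p q : pt) : p <> q ->
  k * (fst p - fst q) = 0 -> k * (snd p - snd q) = 0 -> k = 0.
Proof.
  intros N E1 E2. destruct p as [p1 p2], q as [q1 q2]; simpl in *.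
  destruct (Req_dec k 0) as [K|K]; auto. exfalso. apply N.
  apply Rmult_integral in E1; apply Rmult_integral in E2.
  destruct E1 as [E1|E1]; [contradiction|]; destruct E2 as [E2|E2]; [contradiction|].
  f_equal; lra.
Qed.

Lemma line_nondeg p q r c : orient p q r <> 0 -> orient p q c = 0 -> c <> p ->
  orient p c r <> 0.
Proof.
  intros H1 H2 H3 E.
  pose proof (orient_vec1 p q r c) as V1. pose proof (orient_vec2 p q r c) as V2.
  rewrite E, H2 in V1, V2.
  apply H1, (scal_vec_zero _ c p H3); lra.
Qed.

Lemma line_trans p q r c : orient p q r = 0 -> orient p c r = 0 -> r <> p -> orient p q c = 0.
Proof.
  intros H1 H2 H3.
  pose proof (orient_vec1 p q r c) as V1. pose proof (orient_vec2 p q r c) as V2.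
  rewrite H1, H2 in V1, V2.
  apply (scal_vec_zero _ r p H3); lra.
Qed.

Lemma collinear3 p q a b c : p <> q -> orient p q a = 0 -> orient p q b = 0 ->
  orient p q c = 0 -> orient a b c = 0.
Proof.
  intros N Ha Hb Hc.
  assert (I1 : orient a b c * (fst q - fst p) =
    (orient p q c - orient p q a) * (fst b - fst a) - (orient p q b - orient p q a) * (fst c - fst a))
    by (unfold orient; ring).
  assert (I2 : orient a b c * (snd q - snd p) =
    (orient p q c - orient p q a) * (snd b - snd a) - (orient p q b - orient p q a) * (snd c - snd a))
    by (unfold orient; ring).
  rewrite Ha, Hb, Hc in I1, I2.
  apply (scal_vec_zero _ q p); [auto|lra|lra].
Qed.

Lemma hval_line h p q c : hval h p = 0 -> hval h q = 0 -> orient p q c = 0 -> p <> q ->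
  hval h c = 0.
Proof.
  intros Hp Hq O N.
  assert (I1 : hval h c * (fst q - fst p) = (fst c - fst p) * (hval h q - hval h p)
     + ny h * orient p q c + (fst q - fst p) * hval h p)
    by (rewrite !hval_eq; unfold orient; ring).
  assert (I2 : hval h c * (snd q - snd p) = (snd c - snd p) * (hval h q - hval h p)
     - nx h * orient p q c + (snd q - snd p) * hval h p)
    by (rewrite !hval_eq; unfold orient; ring).
  rewrite Hp, Hq, O in I1, I2.
  apply (scal_vec_zero _ q p); [auto|lra|lra].
Qed.

Lemma three_on_line h p q r : hval h p = 0 -> hval h q = 0 -> hval h r = 0 ->
  (nx h <> 0 \/ ny h <> 0) -> orient p q r = 0.
Proof.
  intros Hp Hq Hr N.
  assert (I1 : orient p q r * nx h =
    (snd r - snd p) * (hval h q - hval h p) - (snd q - snd p) * (hval h r - hval h p))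
    by (rewrite !hval_eq; unfold orient; ring).
  assert (I2 : orient p q r * ny h =
    (fst q - fst p) * (hval h r - hval h p) - (fst r - fst p) * (hval h q - hval h p))
    by (rewrite !hval_eq; unfold orient; ring).
  rewrite Hp, Hq, Hr in I1, I2.
  destruct N as [N|N].
  - apply (Rmult_eq_reg_r (nx h)); auto. rewrite I1. ring.
  - apply (Rmult_eq_reg_r (ny h)); auto. rewrite I2. ring.
Qed.

Lemma argmin_ex {T} (l : list T) (Pr : T -> Prop) (phi : T -> R) :
  (exists a, In a l /\ Pr a) ->
  exists m, In m l /\ Pr m /\ forall b, In b l -> Pr b -> phi m <= phi b.
Proof.
  induction l as [|x l IH]; intros [a [Ha Pa]]; [destruct Ha|].
  destruct (classic (exists a, In a l /\ Pr a)) as [Ex|Nex].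
  - destruct (IH Ex) as [m [Hm [Pm Hmin]]].
    destruct (classic (Pr x /\ phi x <= phi m)) as [[Px Le]|N].
    + exists x. split; [simpl; auto|]. split; auto.
      intros b [E|Hb] Pb; [subst; lra|]. specialize (Hmin b Hb Pb). lra.
    + exists m. split; [simpl; auto|]. split; auto.
      intros b [E|Hb] Pb; auto. subst b.
      destruct (Rle_dec (phi x) (phi m)); [exfalso; apply N; auto|lra].
  - destruct Ha as [E|Ha]; [subst a|exfalso; apply Nex; eauto].
    exists x. split; [simpl; auto|]. split; auto.
    intros b [E|Hb] Pb; [subst; lra|]. exfalso; apply Nex; eauto.
Qed.

Lemma continuity_pt_ext (f1 f2 : R -> R) x :
  (forall y, f1 y = f2 y) -> continuity_pt f1 x -> continuity_pt f2 x.
Proof. intros E C. apply continuity_pt_locally_ext with (f := f1) (a := 1); auto; lra. Qed.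

Lemma cont_sign (g : R -> R) : continuity_pt g 0 -> g 0 <> 0 ->
  exists e, 0 < e /\ 0 < g e * g 0.
Proof.
  intros C N.
  unfold continuity_pt, continue_in, limit1_in, limit_in in C. simpl in C.
  destruct (C (Rabs (g 0))) as [alp [Ha Hc]]; [apply Rabs_pos_lt; auto|].
  exists (alp / 2). split; [lra|].
  assert (Hd : Rabs (g (alp / 2) - g 0) < Rabs (g 0)).
  { apply Hc. split.
    - unfold D_x, no_cond; split; auto; lra.
    - unfold R_dist. rewrite Rminus_0_r, Rabs_right; lra. }
  destruct (Rlt_dec 0 (g 0)) as [P|P].
  - rewrite (Rabs_right (g 0)) in Hd by lra. apply Rabs_def2 in Hd. nra.
  - rewrite (Rabs_left (g 0)) in Hd by lra. apply Rabs_def2 in Hd. nra.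
Qed.

Lemma ln_sign_prod a b : 0 < a -> 0 < b -> 0 <= ln (b / a) * (b - a) /\
  (ln (b / a) * (b - a) = 0 -> a = b).
Proof.
  intros Ha Hb.
  destruct (Rtotal_order a b) as [L|[E|L]].
  - assert (1 < b / a) by (apply (Rmult_lt_reg_r a); auto; unfold Rdiv;
                           rewrite Rmult_assoc, Rinv_l; lra).
    assert (0 < ln (b / a)) by (rewrite <- ln_1; apply ln_increasing; lra).
    split; [nra|]. intros Z. apply Rmult_integral in Z. lra.
  - subst. split; [|auto]. replace (b - b) with 0 by ring. lra.
  - assert (b / a < 1) by (apply (Rmult_lt_reg_r a); auto; unfold Rdiv;
                           rewrite Rmult_assoc, Rinv_l; lra).
    assert (0 < b / a) by (apply Rdiv_lt_0_compat; auto).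
    assert (ln (b / a) < 0) by (rewrite <- ln_1; apply ln_increasing; lra).
    split; [nra|]. intros Z. apply Rmult_integral in Z. lra.
Qed.

Definition exp_weight (D g : R) : R := if Req_EM_T g 0 then D else D * g / (exp g - 1).

Lemma exp_weight_spec (D g : R) : 0 < D ->
  0 < exp_weight D g /\ D * g = exp_weight D g * (exp g - 1).
Proof.
  intros HD. unfold exp_weight. destruct (Req_EM_T g 0) as [E|E].
  - rewrite E, exp_0. split; [auto|ring].
  - destruct (Rtotal_order g 0) as [L|[L|L]]; [|contradiction|].
    + assert (exp g < 1) by (rewrite <- exp_0; apply exp_increasing; auto).
      split; [|field; lra].
      replace (D * g / (exp g - 1)) with ((D * (- g)) / (1 - exp g)) by (field; lra).
      apply Rdiv_lt_0_compat; [apply Rmult_lt_0_compat|]; lra.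
    + assert (1 < exp g) by (rewrite <- exp_0; apply exp_increasing; auto).
      split; [|field; lra].
      apply Rdiv_lt_0_compat; [apply Rmult_lt_0_compat|]; lra.
Qed.

Section Polygon.
Variable A : list lpt.
Variable H : list aform.
Hypothesis Hnd : NoDup A.
Hypothesis Hed : edge_data A H.

Lemma ed_hull x : in_hull A x <-> (forall h, In h H -> 0 <= hval h x).
Proof. destruct Hed as [_ [_ [_ E]]]. apply E. Qed.

Lemma hval_nonneg x h : in_hull A x -> In h H -> 0 <= hval h x.
Proof. intros Hx Hh. apply (proj1 (ed_hull x)); auto. Qed.

Lemma in_hull_pt (a : lpt) : In a A -> in_hull A (toR a).
Proof.
  intros Ha. exists (fun b => if lpt_eq_dec b a then 1 else 0).
  assert (Single : forall g : lpt -> R,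
    sumR A (fun b => (if lpt_eq_dec b a then 1 else 0) * g b) = g a).
  { intros g. rewrite (sumR_single A _ a Hnd Ha).
    - destruct (lpt_eq_dec a a); [ring|congruence].
    - intros b _ Hb; destruct (lpt_eq_dec b a); [congruence|ring]. }
  split; [intros b _; destruct (lpt_eq_dec b a); lra|].
  split; [|split; [symmetry; apply (Single (fun b => IZR (fst b)))
                  |symmetry; apply (Single (fun b => IZR (snd b)))]].
  transitivity (sumR A (fun b => (if lpt_eq_dec b a then 1 else 0) * 1));
    [apply sumR_ext; intros; ring|apply (Single (fun _ => 1))].
Qed.

Lemma hval_A_nonneg h a : In h H -> In a A -> 0 <= hval h (toR a).
Proof. intros Hh Ha. apply hval_nonneg; auto. apply in_hull_pt; auto. Qed.

Lemma hvalZ_A_nonneg h a : In h H -> In a A -> (0 <= hvalZ h a)%Z.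
Proof. intros Hh Ha. apply le_IZR. rewrite <- hval_toR. apply hval_A_nonneg; auto. Qed.

Lemma hull_hval (l : list lpt) (lam : lpt -> R) x h :
  sumR l lam = 1 ->
  fst x = sumR l (fun a => lam a * IZR (fst a)) ->
  snd x = sumR l (fun a => lam a * IZR (snd a)) ->
  hval h x = sumR l (fun a => lam a * hval h (toR a)).
Proof.
  intros E1 E2 E3. rewrite hval_eq, E2, E3.
  rewrite (sumR_ext l (fun a => lam a * hval h (toR a))
     (fun a => nx h * (lam a * IZR (fst a)) + ny h * (lam a * IZR (snd a)) + cz h * lam a)).
  - rewrite !sumR_plus, !sumR_scal, E1. ring.
  - intros a _. rewrite hval_eq. unfold toR; simpl. ring.
Qed.

(* a lies in the smallest face of Delta_A containing x: every edge line
   through x passes through a.  These are exactly the a with beta_a(x) > 0. *)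
Definition in_face (x : pt) (a : lpt) : Prop :=
  forall h, In h H -> hval h x = 0 -> hvalZ h a = 0%Z.

Lemma support_in_face (l : list lpt) (lam : lpt -> R) x a :
  incl l A ->
  (forall b, In b l -> 0 <= lam b) -> sumR l lam = 1 ->
  fst x = sumR l (fun a => lam a * IZR (fst a)) ->
  snd x = sumR l (fun a => lam a * IZR (snd a)) ->
  In a l -> 0 < lam a -> in_face x a.
Proof.
  intros Hincl Hl E1 E2 E3 Ha Hpos h Hh Hx.
  rewrite (hull_hval l lam x h E1 E2 E3) in Hx.
  assert (Z : lam a * hval h (toR a) = 0).
  { apply (sumR_zero_nonneg l (fun a => lam a * hval h (toR a))); auto.
    intros b Hb. apply Rmult_le_pos; auto. apply hval_A_nonneg; auto. }
  apply Rmult_integral in Z. destruct Z as [Z|Z]; [lra|].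
  rewrite hval_toR in Z. apply eq_IZR in Z. auto.
Qed.

Lemma in_face_exists x : in_hull A x -> exists a, In a A /\ in_face x a.
Proof.
  intros [lam [Hl [E1 [E2 E3]]]].
  destruct (classic (exists a, In a A /\ 0 < lam a)) as [[a [Ha Hp]]|Hn].
  - exists a; split; auto. apply (support_in_face A lam x a); auto. intros b; auto.
  - exfalso. assert (sumR A lam = 0); [|lra].
    rewrite (sumR_ext A lam (fun _ => 0)); [apply sumR_const0|].
    intros a Ha. assert (0 <= lam a) by auto.
    destruct (Req_dec (lam a) 0); auto. exfalso; apply Hn; exists a; split; auto; lra.
Qed.

Lemma in_face_self v : in_face (toR v) v.
Proof. intros h Hh E. rewrite hval_toR in E. apply eq_IZR in E. auto. Qed.

Lemma hull_bound x : in_hull A x ->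
  Rabs (fst x) <= sumR A (fun a => Rabs (IZR (fst a))) /\
  Rabs (snd x) <= sumR A (fun a => Rabs (IZR (snd a))).
Proof.
  intros [lam [Hl [E1 [E2 E3]]]].
  assert (Hle : forall a, In a A -> 0 <= lam a <= 1).
  { intros a Ha. split; auto. rewrite <- E1. apply (sumR_in_le A lam a); auto. }
  assert (Bnd : forall c : lpt -> R, Rabs (sumR A (fun a => lam a * c a)) <=
                                     sumR A (fun a => Rabs (c a))).
  { intros c. eapply Rle_trans; [apply sumR_abs|]. apply sumR_le.
    intros a Ha. rewrite Rabs_mult. rewrite (Rabs_right (lam a)) by (apply Rle_ge; apply Hle; auto).
    pose proof (Rabs_pos (c a)). pose proof (Hle a Ha). nra. }
  rewrite E2, E3. split; apply Bnd.
Qed.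

Lemma normal_nonzero h : In h H -> nx h <> 0 \/ ny h <> 0.
Proof.
  intros Hh. destruct Hed as [_ [G _]]. specialize (G h Hh).
  destruct h as [[a b] c]. simpl in *.
  destruct (Z.eq_dec a 0) as [Ea|Ea]; [|left; apply not_0_IZR; auto].
  destruct (Z.eq_dec b 0) as [Eb|Eb]; [|right; apply not_0_IZR; auto].
  subst. simpl in G. discriminate.
Qed.

(* Coordinate along the edge line of h. *)
Definition tangent_coord (h : aform) (p : pt) : R := nx h * snd p - ny h * fst p.

Lemma line_eq h p q : In h H -> hval h p = 0 -> hval h q = 0 ->
  tangent_coord h p = tangent_coord h q -> p = q.
Proof.
  intros Hh Hp Hq Ht. unfold tangent_coord in Ht. rewrite hval_eq in Hp, Hq.
  assert (Np : 0 < nx h * nx h + ny h * ny h).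
  { destruct (normal_nonzero h Hh) as [N|N].
    - assert (0 < nx h * nx h) by (apply Rsqr_pos_lt; auto). nra.
    - assert (0 < ny h * ny h) by (apply Rsqr_pos_lt; auto). nra. }
  destruct p as [p1 p2], q as [q1 q2]; simpl in *.
  assert (E1 : (nx h * nx h + ny h * ny h) * (p1 - q1) = 0).
  { transitivity (nx h * ((nx h * p1 + ny h * p2 + cz h) - (nx h * q1 + ny h * q2 + cz h))
                  - ny h * ((nx h * p2 - ny h * p1) - (nx h * q2 - ny h * q1))); [ring|].
    rewrite Hp, Hq, Ht. ring. }
  assert (E2 : (nx h * nx h + ny h * ny h) * (p2 - q2) = 0).
  { transitivity (ny h * ((nx h * p1 + ny h * p2 + cz h) - (nx h * q1 + ny h * q2 + cz h))
                  + nx h * ((nx h * p2 - ny h * p1) - (nx h * q2 - ny h * q1))); [ring|].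
    rewrite Hp, Hq, Ht. ring. }
  apply Rmult_integral in E1; apply Rmult_integral in E2.
  destruct E1 as [E1|E1]; [lra|]; destruct E2 as [E2|E2]; [lra|].
  f_equal; lra.
Qed.

(* The extreme point (for the tangent coordinate, in direction sg) among the
   points of A on the edge line of h through q is a vertex of Delta_A: it
   cannot be a convex combination of other points, which all lie strictly
   further in that direction. *)
Lemma extreme_vertex (q : pt) h (sg : R) (P : lpt) :
  In h H -> hval h q = 0 -> sg <> 0 -> In P A -> in_face q P ->
  (forall b, In b A -> in_face q b ->
     sg * tangent_coord h (toR P) <= sg * tangent_coord h (toR b)) ->
  is_vertex A P.
Proof.
  intros Hh Hq Hsg HP SP Hmin. split; auto.
  set (l := remove lpt_eq_dec P A).
  intros [lam [Hl [E1 [E2 E3]]]].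
  set (tP := sg * tangent_coord h (toR P)).
  assert (Hincl : incl l A) by (intros b Hb; apply (in_remove _ _ _ _ Hb)).
  assert (Hpos : forall b, In b l -> 0 < lam b -> tP < sg * tangent_coord h (toR b)).
  { intros b Hb Lb. destruct (in_remove _ _ _ _ Hb) as [HbA Hne].
    pose proof (support_in_face _ lam (toR P) b Hincl Hl E1 E2 E3 Hb Lb) as Sb.
    assert (Sqb : in_face q b).
    { intros h' Hh' E. apply Sb; auto. rewrite hval_toR, (SP h' Hh' E). reflexivity. }
    specialize (Hmin b HbA Sqb).
    destruct (Req_dec tP (sg * tangent_coord h (toR b))) as [E|E]; [|unfold tP in *; lra].
    exfalso. apply Hne. apply toR_inj. apply (line_eq h); auto.
    - rewrite hval_toR, (Sqb h Hh Hq). reflexivity.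
    - rewrite hval_toR, (SP h Hh Hq). reflexivity.
    - apply (Rmult_eq_reg_l sg); auto. }
  assert (Z : sumR l (fun b => lam b * (sg * tangent_coord h (toR b) - tP)) = 0).
  { rewrite (sumR_ext _ _ (fun b => sg * nx h * (lam b * IZR (snd b))
                                 - sg * ny h * (lam b * IZR (fst b)) - tP * lam b))
      by (intros; unfold tangent_coord, toR; simpl; ring).
    rewrite !sumR_minus, !sumR_scal, E1, <- E2, <- E3.
    unfold tP, tangent_coord, toR; simpl. ring. }
  assert (Hnn : forall b, In b l -> 0 <= lam b * (sg * tangent_coord h (toR b) - tP)).
  { intros b Hb. destruct (Req_dec (lam b) 0) as [L|L]; [rewrite L; lra|].
    assert (0 < lam b) by (pose proof (Hl b Hb); lra).
    specialize (Hpos b Hb H0). nra. }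
  assert (Hz : forall b, In b l -> lam b = 0).
  { intros b Hb. pose proof (sumR_zero_nonneg _ _ Hnn Z b Hb) as Zb.
    destruct (Req_dec (lam b) 0) as [L|L]; auto.
    assert (0 < lam b) by (pose proof (Hl b Hb); lra).
    specialize (Hpos b Hb H0). exfalso.
    apply Rmult_integral in Zb. destruct Zb; lra. }
  rewrite (sumR_ext _ lam (fun _ => 0) Hz), sumR_const0 in E1. lra.
Qed.

Lemma sum_remove (l : list lpt) (g : lpt -> R) (v : lpt) :
  NoDup l -> In v l -> sumR l g = g v + sumR (remove lpt_eq_dec v l) g.
Proof.
  induction l as [|x l IH]; intros Hnd' Hv; [destruct Hv|].
  inversion Hnd'; subst. simpl.
  destruct (lpt_eq_dec v x) as [E|E].
  - subst. rewrite notin_remove; auto.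
  - simpl. destruct Hv as [Hv|Hv]; [congruence|]. rewrite (IH H3 Hv). ring.
Qed.

(* If b lies in the face of v, one can step from v a little beyond v, away
   from b, and stay in Delta_A: edge forms vanishing at v vanish at b, and
   the others are >= 1 at v. *)
Lemma step_beyond_in_hull v b : In v A -> in_face (toR v) b ->
  exists eps, 0 < eps /\
    in_hull A (IZR (fst v) + eps * (IZR (fst v) - IZR (fst b)),
               IZR (snd v) + eps * (IZR (snd v) - IZR (snd b))).
Proof.
  intros Hv Sb.
  set (Sd := sumR H (fun h => Rabs (hval h (toR v) - hval h (toR b)))).
  assert (Ssum : 0 <= Sd) by (apply sumR_nonneg; intros; apply Rabs_pos).
  exists (1 / (1 + Sd)). split; [apply Rdiv_lt_0_compat; lra|].
  apply ed_hull. intros h Hh.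
  assert (E : hval h (IZR (fst v) + 1 / (1 + Sd) * (IZR (fst v) - IZR (fst b)),
                      IZR (snd v) + 1 / (1 + Sd) * (IZR (snd v) - IZR (snd b)))
            = hval h (toR v) + (hval h (toR v) - hval h (toR b)) / (1 + Sd))
    by (rewrite !hval_eq; unfold toR; simpl; field; lra).
  rewrite E.
  destruct (Req_dec (hval h (toR v)) 0) as [Z|Z].
  - rewrite Z, hval_toR, (Sb h Hh Z). unfold Rdiv. lra.
  - assert (G1 : 1 <= hval h (toR v)).
    { rewrite hval_toR in *. apply IZR_le. pose proof (hvalZ_A_nonneg h v Hh Hv).
      assert (hvalZ h v <> 0%Z) by (intro E'; apply Z; rewrite E'; auto). lia. }
    pose proof (sumR_in_le H (fun h => Rabs (hval h (toR v) - hval h (toR b))) h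
      (fun _ _ => Rabs_pos _) Hh) as Le. fold Sd in Le. simpl in Le.
    pose proof (Rle_abs (- (hval h (toR v) - hval h (toR b)))) as Ab. rewrite Rabs_Ropp in Ab.
    assert (- (hval h (toR v) - hval h (toR b)) / (1 + Sd) <= 1)
      by (apply (Rmult_le_reg_r (1 + Sd)); [lra|]; field_simplify; lra).
    unfold Rdiv in *. lra.
Qed.

Lemma beyond_point_hull v b eps : In v A -> In b A -> b <> v -> 0 < eps ->
  in_hull A (IZR (fst v) + eps * (IZR (fst v) - IZR (fst b)),
             IZR (snd v) + eps * (IZR (snd v) - IZR (snd b))) ->
  in_hull (remove lpt_eq_dec v A) (toR v).
Proof.
  intros Hv Hb Hne Eps [mu [Hm [Em1 [Em2 Em3]]]].
  set (l := remove lpt_eq_dec v A).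
  assert (Hmv : mu v <= 1) by (rewrite <- Em1; apply (sumR_in_le A mu v); auto).
  set (den := 1 + eps - mu v).
  assert (Den : 0 < den) by (unfold den; lra).
  set (ib := fun a => if lpt_eq_dec a b then 1 else 0).
  assert (Ib : forall g, sumR l (fun a => ib a * g a) = g b).
  { intros g. pose proof (sum_remove A (fun a => ib a * g a) v Hnd Hv) as SR.
    rewrite (sumR_single A (fun a => ib a * g a) b Hnd Hb) in SR.
    - unfold ib in *. destruct (lpt_eq_dec v b); [congruence|].
      destruct (lpt_eq_dec b b); [|congruence]. fold l in SR. lra.
    - intros a _ Ha. unfold ib. destruct (lpt_eq_dec a b); [congruence|ring]. }
  pose proof (sum_remove A mu v Hnd Hv) as R1.
  pose proof (sum_remove A (fun a => mu a * IZR (fst a)) v Hnd Hv) as R2.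
  pose proof (sum_remove A (fun a => mu a * IZR (snd a)) v Hnd Hv) as R3.
  fold l in R1, R2, R3. simpl in Em2, Em3.
  assert (Comb : forall g : lpt -> R,
    sumR l (fun a => (mu a + eps * ib a) / den * g a) =
    (sumR l (fun a => mu a * g a) + eps * g b) / den).
  { intros g. rewrite (sumR_ext _ _ (fun a => / den * (mu a * g a) + (eps / den) * (ib a * g a)))
      by (intros; unfold Rdiv; ring).
    rewrite sumR_plus, !sumR_scal, Ib. field. lra. }
  exists (fun a => (mu a + eps * ib a) / den).
  split; [|split; [|split]].
  - intros a Ha. destruct (in_remove _ _ _ _ Ha) as [HaA _].
    apply Rmult_le_pos; [|left; apply Rinv_0_lt_compat; auto].
    pose proof (Hm a HaA). unfold ib. destruct (lpt_eq_dec a b); nra.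
  - rewrite (sumR_ext _ _ (fun a => (mu a + eps * ib a) / den * 1)) by (intros; ring).
    rewrite Comb, (sumR_ext _ (fun a => mu a * 1) mu) by (intros; ring).
    replace (sumR l mu) with (1 - mu v) by lra. unfold den. field. lra.
  - rewrite Comb. replace (sumR l (fun a => mu a * IZR (fst a))) with
      (IZR (fst v) + eps * (IZR (fst v) - IZR (fst b)) - mu v * IZR (fst v)) by lra.
    unfold toR, den; simpl. field. lra.
  - rewrite Comb. replace (sumR l (fun a => mu a * IZR (snd a))) with
      (IZR (snd v) + eps * (IZR (snd v) - IZR (snd b)) - mu v * IZR (snd v)) by lra.
    unfold toR, den; simpl. field. lra.
Qed.

Lemma vertex_unique v : is_vertex A v -> forall b, In b A -> in_face (toR v) b -> b = v.
Proof.
  intros [Hv Hnot] b Hb Sb. apply NNPP; intro Hne.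
  destruct (step_beyond_in_hull v b Hv Sb) as [eps [Eps Hp]].
  exact (Hnot (beyond_point_hull v b eps Hv Hb Hne Eps Hp)).
Qed.

Hypothesis Hpoly : is_polygon A.

(* Since Delta_A is bounded and two-dimensional, the edge normals span R^2. *)
Lemma normals_span d1 d2 :
  (forall h, In h H -> nx h * d1 + ny h * d2 = 0) -> d1 = 0 /\ d2 = 0.
Proof.
  intros Hn.
  destruct Hpoly as [a0 [_ [_ [Ha0 _]]]].
  assert (Hin : forall t, in_hull A (fst (toR a0) + t * d1, snd (toR a0) + t * d2)).
  { intros t. apply ed_hull. intros h Hh.
    pose proof (hval_A_nonneg h a0 Hh Ha0) as P. specialize (Hn h Hh).
    rewrite hval_eq in P |- *. simpl in *.
    replace (nx h * (IZR (fst a0) + t * d1) + ny h * (IZR (snd a0) + t * d2) + cz h)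
      with (nx h * IZR (fst a0) + ny h * IZR (snd a0) + cz h + t * (nx h * d1 + ny h * d2))
      by ring.
    rewrite Hn. lra. }
  set (B1 := sumR A (fun a => Rabs (IZR (fst a)))).
  set (B2 := sumR A (fun a => Rabs (IZR (snd a)))).
  assert (B1p : 0 <= B1) by (apply sumR_nonneg; intros; apply Rabs_pos).
  assert (B2p : 0 <= B2) by (apply sumR_nonneg; intros; apply Rabs_pos).
  assert (Unbounded : forall (c d B : R), d <> 0 -> 0 <= B ->
            exists t, B < Rabs (c + t * d)).
  { intros c d B Hd HB. exists ((B + 1 + Rabs c) / d).
    replace ((B + 1 + Rabs c) / d * d) with (B + 1 + Rabs c) by (field; auto).
    pose proof (Rle_abs (- c)) as Ac. rewrite Rabs_Ropp in Ac.
    rewrite Rabs_right; lra. }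
  split.
  - destruct (Req_dec d1 0) as [E|E]; auto. exfalso.
    destruct (Unbounded (IZR (fst a0)) d1 B1 E B1p) as [t Ht].
    destruct (hull_bound _ (Hin t)) as [Hb _]. simpl in Hb. fold B1 in Hb. lra.
  - destruct (Req_dec d2 0) as [E|E]; auto. exfalso.
    destruct (Unbounded (IZR (snd a0)) d2 B2 E B2p) as [t Ht].
    destruct (hull_bound _ (Hin t)) as [_ Hb]. simpl in Hb. fold B2 in Hb. lra.
Qed.

Lemma hval_equal_pts x y :
  (forall h, In h H -> hval h x = hval h y) -> x = y.
Proof.
  intros E. destruct (normals_span (fst y - fst x) (snd y - snd x)) as [E1 E2].
  - intros h Hh. specialize (E h Hh). rewrite !hval_eq in E. lra.
  - destruct x, y; simpl in *. f_equal; lra.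
Qed.

(* The barycentre of a nondegenerate lattice triangle in A is interior, with
   every edge form at least 1/3 there (edge forms are integral on A). *)
Lemma interior_pt : exists x0, in_hull A x0 /\ forall h, In h H -> 1/3 <= hval h x0.
Proof.
  destruct Hpoly as [a0 [a1 [a2 [H0 [H1 [H2 O]]]]]].
  set (x0 := ((IZR (fst a0) + IZR (fst a1) + IZR (fst a2)) / 3,
              (IZR (snd a0) + IZR (snd a1) + IZR (snd a2)) / 3)).
  assert (Hh : forall h, In h H -> 1/3 <= hval h x0).
  { intros h Hh.
    assert (E : hval h x0 = (hval h (toR a0) + hval h (toR a1) + hval h (toR a2)) / 3)
      by (unfold x0; rewrite !hval_eq; unfold toR; simpl; field).
    rewrite E, !hval_toR.
    pose proof (hvalZ_A_nonneg h a0 Hh H0).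
    pose proof (hvalZ_A_nonneg h a1 Hh H1).
    pose proof (hvalZ_A_nonneg h a2 Hh H2).
    destruct (Z.eq_dec (hvalZ h a0 + hvalZ h a1 + hvalZ h a2) 0) as [Z|Z].
    - exfalso. apply O. apply (three_on_line h); try (apply normal_nonzero; auto);
      rewrite hval_toR; apply IZR_eq; lia.
    - assert (Q : 1 <= IZR (hvalZ h a0 + hvalZ h a1 + hvalZ h a2)) by (apply IZR_le; lia).
      rewrite !plus_IZR in Q. lra. }
  exists x0. split; auto. apply ed_hull. intros h Hh'. specialize (Hh h Hh'). lra.
Qed.

End Polygon.

Section Bernstein.
Variable A : list lpt.
Variable H : list aform.
Hypothesis Hnd : NoDup A.
Hypothesis Hed : edge_data A H.

Lemma beta_nonneg x a : in_hull A x -> 0 <= beta H a x.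
Proof.
  intros Hx. unfold beta. apply prodR_nonneg. intros h Hh.
  apply pow_le. apply (hval_nonneg A H Hed); auto.
Qed.

Lemma beta_pos x a : in_hull A x -> in_face H x a -> 0 < beta H a x.
Proof.
  intros Hx HS. unfold beta. apply prodR_pos. intros h Hh.
  destruct (Req_dec (hval h x) 0) as [E|E].
  - rewrite (HS h Hh E). simpl. lra.
  - apply pow_lt. pose proof (hval_nonneg A H Hed x h Hx Hh). lra.
Qed.

Lemma beta_zero x a : In a A -> ~ in_face H x a -> beta H a x = 0.
Proof.
  intros Ha HS. unfold in_face in HS.
  apply not_all_ex_not in HS. destruct HS as [h HS].
  apply imply_to_and in HS. destruct HS as [Hh HS].
  apply imply_to_and in HS. destruct HS as [E HS].
  unfold beta. apply (prodR_zero H _ h Hh). rewrite E.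
  apply pow_i. pose proof (hvalZ_A_nonneg A H Hnd Hed h a Hh Ha). lia.
Qed.

Lemma den_pos (w : lpt -> R) x : pos_weights A w -> in_hull A x ->
  0 < sumR A (fun a => w a * beta H a x).
Proof.
  intros Hw Hx. destruct (in_face_exists A H Hnd Hed x Hx) as [a [Ha HS]].
  apply (sumR_pos A _ a); auto.
  - intros b Hb. apply Rmult_le_pos; [apply Rlt_le; auto|apply beta_nonneg; auto].
  - apply Rmult_lt_0_compat; [auto|apply beta_pos; auto].
Qed.

Definition log_ratio (x y : pt) (h : aform) : R :=
  if Rlt_dec 0 (hval h x) then if Rlt_dec 0 (hval h y) then ln (hval h y / hval h x) else 0
  else 0.

(* On the common face of x and y, the ratio of Bernstein polynomials is the
   exponential of an affine function of a:
     beta_a(y) = beta_a(x) exp(sum_h log_ratio(h) h(a)). *)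
Lemma beta_ratio_list (l : list aform) x y a :
  incl l H -> in_hull A x -> in_hull A y -> In a A -> in_face H x a -> in_face H y a ->
  prodR l (fun h => hval h y ^ Z.to_nat (hvalZ h a)) =
  prodR l (fun h => hval h x ^ Z.to_nat (hvalZ h a)) *
  exp (sumR l (fun h => log_ratio x y h * hval h (toR a))).
Proof.
  intros Hl Hx Hy Ha Sx Sy. induction l as [|h l IH]; simpl.
  - rewrite exp_0. ring.
  - rewrite exp_plus. rewrite IH by (intros z Hz; apply Hl; simpl; auto).
    assert (Hh : In h H) by (apply Hl; simpl; auto).
    enough (F : hval h y ^ Z.to_nat (hvalZ h a) =
                hval h x ^ Z.to_nat (hvalZ h a) * exp (log_ratio x y h * hval h (toR a)))
      by (rewrite F; ring).
    pose proof (hvalZ_A_nonneg A H Hnd Hed h a Hh Ha) as Hz.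
    destruct (Z.eq_dec (hvalZ h a) 0) as [Z0|Z0].
    { rewrite hval_toR, Z0. simpl. rewrite Rmult_0_r, exp_0. ring. }
    assert (Px : 0 < hval h x).
    { pose proof (hval_nonneg A H Hed x h Hx Hh).
      destruct (Req_dec (hval h x) 0) as [E|E]; [exfalso; apply Z0; apply Sx; auto|lra]. }
    assert (Py : 0 < hval h y).
    { pose proof (hval_nonneg A H Hed y h Hy Hh).
      destruct (Req_dec (hval h y) 0) as [E|E]; [exfalso; apply Z0; apply Sy; auto|lra]. }
    unfold log_ratio. destruct (Rlt_dec 0 (hval h x)); [|lra].
    destruct (Rlt_dec 0 (hval h y)); [|lra].
    assert (En : IZR (hvalZ h a) = INR (Z.to_nat (hvalZ h a))).
    { rewrite INR_IZR_INZ. rewrite Z2Nat.id by lia. reflexivity. }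
    rewrite hval_toR, En. set (n := Z.to_nat (hvalZ h a)).
    rewrite (Rmult_comm (ln _) (INR n)).
    change (exp (INR n * ln (hval h y / hval h x)))
      with (Rpower (hval h y / hval h x) (INR n)).
    rewrite Rpower_pow by (apply Rdiv_lt_0_compat; auto).
    rewrite Rmult_comm. rewrite <- Rpow_mult_distr. f_equal. field. lra.
Qed.

Lemma beta_ratio x y a :
  in_hull A x -> in_hull A y -> In a A -> in_face H x a -> in_face H y a ->
  beta H a y = beta H a x * exp (sumR H (fun h => log_ratio x y h * hval h (toR a))).
Proof. intros. unfold beta. apply beta_ratio_list; auto. intros z; auto. Qed.

Lemma isolated_point x v : in_hull A x -> In v A ->
  (forall b, In b A -> in_face H x b -> b = v) -> x = toR v.
Proof.
  intros [lam [Hl [E1 [E2 E3]]]] Hv Huniq.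
  assert (Hz : forall b, In b A -> b <> v -> lam b = 0).
  { intros b Hb Hne. destruct (Req_dec (lam b) 0) as [L|L]; auto.
    exfalso. apply Hne. apply Huniq; auto.
    apply (support_in_face A H Hnd Hed A lam x b); auto; [intros z; auto|].
    pose proof (Hl b Hb). lra. }
  rewrite (sumR_single A lam v Hnd Hv Hz) in E1.
  rewrite (sumR_single A _ v Hnd Hv) in E2 by (intros b Hb Hne; rewrite (Hz b Hb Hne); ring).
  rewrite (sumR_single A _ v Hnd Hv) in E3 by (intros b Hb Hne; rewrite (Hz b Hb Hne); ring).
  destruct x as [x1 x2]; unfold toR; simpl in *. rewrite E1 in E2, E3. f_equal; lra.
Qed.

Lemma isolated_vertex v : In v A ->
  (forall b, In b A -> in_face H (toR v) b -> b = v) -> is_vertex A v.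
Proof.
  intros Hv Huniq. split; auto.
  set (l := remove lpt_eq_dec v A).
  intros [lam [Hl [E1 [E2 E3]]]].
  assert (Hincl : incl l A) by (intros b Hb; apply (in_remove _ _ _ _ Hb)).
  destruct (classic (exists b, In b l /\ 0 < lam b)) as [[b [Hb Lb]]|N].
  - pose proof (support_in_face A H Hnd Hed _ lam (toR v) b Hincl Hl E1 E2 E3 Hb Lb) as Sb.
    destruct (in_remove _ _ _ _ Hb) as [HbA Hne]. exact (Hne (Huniq b HbA Sb)).
  - assert (sumR l lam = 0); [|lra].
    rewrite (sumR_ext _ lam (fun _ => 0)); [apply sumR_const0|].
    intros b Hb. pose proof (Hl b Hb). destruct (Req_dec (lam b) 0); auto.
    exfalso; apply N; exists b; split; auto; lra.
Qed.

Lemma patch_isolated (f : lpt -> pt) (w : lpt -> R) x v :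
  pos_weights A w -> in_hull A x -> In v A -> in_face H x v ->
  (forall b, In b A -> in_face H x b -> b = v) -> patch A H w f x = f v.
Proof.
  intros Hw Hx Hv Sv Huniq.
  assert (Hb0 : forall b, In b A -> b <> v -> beta H b x = 0).
  { intros b Hb Hne. apply beta_zero; auto. }
  pose proof (beta_pos x v Hx Sv). pose proof (Hw v Hv).
  unfold patch.
  rewrite (sumR_single A (fun a => w a * beta H a x) v Hnd Hv)
    by (intros b Hb Hne; rewrite (Hb0 b Hb Hne); ring).
  rewrite (sumR_single A (fun a => w a * fst (f a) * beta H a x) v Hnd Hv)
    by (intros b Hb Hne; rewrite (Hb0 b Hb Hne); ring).
  rewrite (sumR_single A (fun a => w a * snd (f a) * beta H a x) v Hnd Hv)
    by (intros b Hb Hne; rewrite (Hb0 b Hb Hne); ring).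
  destruct (f v) as [f1 f2]; simpl. f_equal; field; split; lra.
Qed.

Lemma patch_vertex (f : lpt -> pt) (w : lpt -> R) v :
  pos_weights A w -> is_vertex A v -> patch A H w f (toR v) = f v.
Proof.
  intros Hw Vv. pose proof (proj1 Vv) as Hv.
  apply patch_isolated; auto.
  - apply (in_hull_pt A Hnd v Hv).
  - apply in_face_self.
  - apply (vertex_unique A H Hnd Hed v Vv).
Qed.

End Bernstein.

Lemma wc_sign (A : list lpt) (f : lpt -> pt) :
  weakly_compatible A f ->
  exists s, s <> 0 /\ forall b0 b1 b2, In b0 A -> In b1 A -> In b2 A ->
      0 <= s * (orient (f b0) (f b1) (f b2) * orient (toR b0) (toR b1) (toR b2)).
Proof.
  intros [a0 [a1 [a2 [H0 [H1 [H2 [HA [Hf Hall]]]]]]]].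
  set (oA := orient (toR a0) (toR a1) (toR a2)) in *.
  set (of := orient (f a0) (f a1) (f a2)) in *.
  exists (of * oA). split; [apply Rmult_integral_contrapositive; auto|].
  intros b0 b1 b2 B0 B1 B2.
  set (ob := orient (toR b0) (toR b1) (toR b2)).
  set (fb := orient (f b0) (f b1) (f b2)).
  destruct (Req_dec ob 0) as [E|E]; [rewrite E; lra|].
  destruct (Req_dec fb 0) as [E'|E']; [rewrite E'; lra|].
  assert (oA * ob <> 0) by (apply Rmult_integral_contrapositive; auto).
  destruct (Rlt_dec 0 (oA * ob)) as [P|P].
  - specialize (Hall b0 b1 b2 B0 B1 B2 P E'). fold fb in Hall. nra.
  - (* the swapped triangle (b1, b0, b2) has the orientation of (a0, a1, a2) *)
    assert (P' : oA * orient (toR b1) (toR b0) (toR b2) > 0) by (rewrite orient_swap; fold ob; lra).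
    assert (E2 : orient (f b1) (f b0) (f b2) <> 0) by (rewrite orient_swap; fold fb; lra).
    specialize (Hall b1 b0 b2 B1 B0 B2 P' E2). rewrite orient_swap in Hall. fold fb in Hall.
    nra.
Qed.

Section Moments.
Variable A : list lpt.
Variable f : lpt -> pt.

Definition frow (i : nat) (a : lpt) : R :=
  match i with 1%nat => fst (f a) | 2%nat => snd (f a) | _ => 1 end.
Definition acol (i : nat) (a : lpt) : R :=
  match i with 1%nat => IZR (fst a) | 2%nat => IZR (snd a) | _ => 1 end.

Definition moment (D : lpt -> R) (i j : nat) : R := sumR A (fun a => D a * frow i a * acol j a).
Definition moment_det (D : lpt -> R) : R :=
  det3 (moment D 1 1) (moment D 1 2) (moment D 1 3) (moment D 2 1) (moment D 2 2)
       (moment D 2 3) (moment D 3 1) (moment D 3 2) (moment D 3 3).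

Lemma moment_det_cauchy_binet D : 6 * moment_det D =
  S3 A (fun a b c => D a * D b * D c *
                     (orient (f a) (f b) (f c) * orient (toR a) (toR b) (toR c))).
Proof.
  pose proof (cauchy_binet A (fun a => D a * fst (f a)) (fun a => D a * snd (f a)) (fun a => D a)
     (fun a => IZR (fst a)) (fun a => IZR (snd a)) (fun _ => 1)) as CB.
  assert (E : forall i j, (i = 1 \/ i = 2 \/ i = 3)%nat -> (j = 1 \/ j = 2 \/ j = 3)%nat ->
     Mx A (fun a => D a * fst (f a)) (fun a => D a * snd (f a)) (fun a => D a)
     (fun a => IZR (fst a)) (fun a => IZR (snd a)) (fun _ => 1) i j = moment D i j).
  { intros i j Hi Hj. unfold Mx, moment. apply sumR_ext; intros a _.
    destruct Hi as [E1|[E1|E1]]; destruct Hj as [E2|[E2|E2]]; subst i j; simpl; ring. }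
  unfold moment_det. rewrite <- !E by lia. rewrite CB. apply S3_ext. intros a b c _ _ _.
  unfold Gp, Gq, det3, orient, toR; simpl. ring.
Qed.

Lemma moment_det_ext D1 D2 : (forall a, In a A -> D1 a = D2 a) -> moment_det D1 = moment_det D2.
Proof.
  intros E. unfold moment_det, moment.
  rewrite !(sumR_ext A (fun a => D1 a * _ * _) (fun a => D2 a * _ * _))
    by (intros a Ha; rewrite (E a Ha); reflexivity).
  reflexivity.
Qed.

Lemma moment_affine D1 D2 e i j :
  moment (fun a => D1 a + e * D2 a) i j = e * moment D2 i j + moment D1 i j.
Proof.
  unfold moment. rewrite <- sumR_scal, <- sumR_plus. apply sumR_ext; intros; ring.
Qed.

Lemma moment_det_affine_continuous D1 D2 :
  continuity (fun e => moment_det (fun a => D1 a + e * D2 a)).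
Proof.
  intros e0. apply (continuity_pt_ext (fun e => det3
    (e * moment D2 1 1 + moment D1 1 1) (e * moment D2 1 2 + moment D1 1 2)
    (e * moment D2 1 3 + moment D1 1 3) (e * moment D2 2 1 + moment D1 2 1)
    (e * moment D2 2 2 + moment D1 2 2) (e * moment D2 2 3 + moment D1 2 3)
    (e * moment D2 3 1 + moment D1 3 1) (e * moment D2 3 2 + moment D1 3 2)
    (e * moment D2 3 3 + moment D1 3 3))).
  - intros e. unfold moment_det. rewrite !moment_affine. reflexivity.
  - apply det3_affine_continuous.
Qed.

Lemma moment_kernel_det_zero (D : lpt -> R) (l1 l2 k : R) :
  (l1 <> 0 \/ l2 <> 0 \/ k <> 0) ->
  (forall i, sumR A (fun a => D a * (l1 * IZR (fst a) + l2 * IZR (snd a) + k) * frow i a) = 0) ->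
  moment_det D = 0.
Proof.
  intros Hl Hsum.
  assert (Row : forall i, moment D i 1 * l1 + moment D i 2 * l2 + moment D i 3 * k =
    sumR A (fun a => D a * (l1 * IZR (fst a) + l2 * IZR (snd a) + k) * frow i a)).
  { intros i. unfold moment. rewrite <- !sumR_scal_r, <- !sumR_plus.
    apply sumR_ext; intros; unfold acol; ring. }
  apply (kernel_det3_zero _ _ _ _ _ _ _ _ _ l1 l2 k); auto; rewrite Row; apply Hsum.
Qed.

Lemma moment_det_zero_kernel (D : lpt -> R) : moment_det D = 0 ->
  exists c1 c2 c3, (c1 <> 0 \/ c2 <> 0 \/ c3 <> 0) /\
    forall i, sumR A (fun a => D a * (c1 * IZR (fst a) + c2 * IZR (snd a) + c3) * frow i a) = 0.
Proof.
  intros Hdet. unfold moment_det in Hdet.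
  destruct (det3_zero_kernel _ _ _ _ _ _ _ _ _ Hdet) as [c1 [c2 [c3 [Nc [R1 [R2 R3]]]]]].
  exists c1, c2, c3. split; auto.
  intros i.
  assert (Row : sumR A (fun a => D a * (c1 * IZR (fst a) + c2 * IZR (snd a) + c3) * frow i a) =
                moment D i 1 * c1 + moment D i 2 * c2 + moment D i 3 * c3).
  { unfold moment. rewrite <- !sumR_scal_r, <- !sumR_plus. apply sumR_ext; intros; unfold acol; ring. }
  rewrite Row. destruct i as [|[|[|i]]]; auto.
Qed.

(* For D > 0 on a nonempty A, a kernel vector of M_D has a nonzero linear
   part (c1, c2): the last equation reads c3 sum D = 0. *)
Lemma kernel_linear_part_nonzero (D : lpt -> R) a0 c1 c2 c3 :
  In a0 A -> (forall a, 0 < D a) -> (c1 <> 0 \/ c2 <> 0 \/ c3 <> 0) ->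
  sumR A (fun a => D a * (c1 * IZR (fst a) + c2 * IZR (snd a) + c3) * frow 3 a) = 0 ->
  ~ (c1 = 0 /\ c2 = 0).
Proof.
  intros Ha0 HD Nc Ker [E1 E2]. unfold frow in Ker. rewrite E1, E2 in Ker.
  rewrite (sumR_ext A _ (fun a => c3 * D a)), sumR_scal in Ker by (intros; ring).
  assert (0 < sumR A D) by (apply (sumR_pos A D a0); auto; intros; left; auto).
  apply Rmult_integral in Ker. destruct Ker as [Ker|Ker]; [|lra].
  destruct Nc as [N|[N|N]]; contradiction.
Qed.

(* Under weak compatibility, a singular moment matrix with D >= 0 forces every
   triangle of points with D > 0 to be degenerate in A or in its image: by
   Cauchy-Binet the determinant is a sum of terms of one sign. *)
Lemma moment_det_zero_degenerate (D : lpt -> R) :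
  weakly_compatible A f ->
  (forall a, In a A -> 0 <= D a) -> moment_det D = 0 ->
  forall a b c, In a A -> In b A -> In c A -> 0 < D a -> 0 < D b -> 0 < D c ->
    orient (f a) (f b) (f c) * orient (toR a) (toR b) (toR c) = 0.
Proof.
  intros Hwc HD Hdet a b c Ha Hb Hc Da Db Dc.
  destruct (wc_sign A f Hwc) as [s [Hs Hall]].
  set (term := fun a b c => D a * D b * D c *
                 (orient (f a) (f b) (f c) * orient (toR a) (toR b) (toR c))).
  assert (Z : S3 A (fun a b c => s * term a b c) = 0).
  { rewrite S3_scal. unfold term. rewrite <- moment_det_cauchy_binet, Hdet. ring. }
  assert (Hnn : forall a b c, In a A -> In b A -> In c A -> 0 <= s * term a b c).
  { intros a' b' c' A1 A2 A3. unfold term.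
    specialize (Hall a' b' c' A1 A2 A3).
    assert (0 <= D a' * D b' * D c') by (apply Rmult_le_pos; [apply Rmult_le_pos|]; auto).
    rewrite Rmult_comm, Rmult_assoc. apply Rmult_le_pos; [auto|]. lra. }
  pose proof (S3_zero_nonneg A _ Hnn Z a b c Ha Hb Hc) as Zabc. unfold term in Zabc.
  assert (0 < D a * D b * D c) by (apply Rmult_lt_0_compat; [apply Rmult_lt_0_compat|]; auto).
  apply Rmult_integral in Zabc. destruct Zabc as [Z1|Z1]; [contradiction|].
  apply Rmult_integral in Z1. destruct Z1 as [Z1|Z1]; [lra|auto].
Qed.

Hypothesis Hnd : NoDup A.

Definition ind3 (t0 t1 t2 : lpt) (a : lpt) : R :=
  (if lpt_eq_dec a t0 then 1 else 0) + (if lpt_eq_dec a t1 then 1 else 0) +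
  (if lpt_eq_dec a t2 then 1 else 0).

Lemma moment_det_ind3 t0 t1 t2 : In t0 A -> In t1 A -> In t2 A ->
  moment_det (ind3 t0 t1 t2) =
  orient (f t0) (f t1) (f t2) * orient (toR t0) (toR t1) (toR t2).
Proof.
  intros H0 H1 H2.
  assert (Ind : forall t (g : lpt -> R), In t A ->
            sumR A (fun a => (if lpt_eq_dec a t then 1 else 0) * g a) = g t).
  { intros t g Ht. rewrite (sumR_single A _ t Hnd Ht).
    - destruct (lpt_eq_dec t t); [ring|congruence].
    - intros a _ Ha. destruct (lpt_eq_dec a t); [congruence|ring]. }
  assert (M : forall i j, moment (ind3 t0 t1 t2) i j =
            frow i t0 * acol j t0 + frow i t1 * acol j t1 + frow i t2 * acol j t2).
  { intros i j. unfold moment, ind3.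
    rewrite (sumR_ext A _ (fun a =>
      (if lpt_eq_dec a t0 then 1 else 0) * (frow i a * acol j a) +
      (if lpt_eq_dec a t1 then 1 else 0) * (frow i a * acol j a) +
      (if lpt_eq_dec a t2 then 1 else 0) * (frow i a * acol j a))) by (intros; ring).
    rewrite !sumR_plus, !Ind by auto. ring. }
  unfold moment_det. rewrite !M. unfold frow, acol, det3, orient, toR; simpl. ring.
Qed.

(* Near the indicator of a triangle whose orientation product is nonzero,
   there is an everywhere positive D with moment determinant of that sign. *)
Lemma positive_moment_sign t0 t1 t2 : In t0 A -> In t1 A -> In t2 A ->
  orient (f t0) (f t1) (f t2) * orient (toR t0) (toR t1) (toR t2) <> 0 ->
  exists D, (forall a, 0 < D a) /\
    0 < moment_det D * (orient (f t0) (f t1) (f t2) * orient (toR t0) (toR t1) (toR t2)).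
Proof.
  intros H0 H1 H2 N.
  set (psi := fun e => moment_det (fun a => ind3 t0 t1 t2 a + e * 1)).
  assert (Psi0 : psi 0 = orient (f t0) (f t1) (f t2) * orient (toR t0) (toR t1) (toR t2)).
  { unfold psi. rewrite <- moment_det_ind3 by auto.
    apply moment_det_ext; intros; ring. }
  destruct (cont_sign psi (moment_det_affine_continuous _ _ 0)) as [e [He Pe]];
    [rewrite Psi0; auto|].
  rewrite Psi0 in Pe.
  exists (fun a => ind3 t0 t1 t2 a + e * 1). split; auto.
  intros a. unfold ind3.
  destruct (lpt_eq_dec a t0); destruct (lpt_eq_dec a t1); destruct (lpt_eq_dec a t2); lra.
Qed.

(* Two triangles with orientation products of opposite signs yield an
   everywhere positive D with singular moment matrix, by the IVT on the
   segment between the two positive D's given by positive_moment_sign. *)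
Lemma opposite_triangles_singular t0 t1 t2 b0 b1 b2 :
  In t0 A -> In t1 A -> In t2 A -> In b0 A -> In b1 A -> In b2 A ->
  (orient (f t0) (f t1) (f t2) * orient (toR t0) (toR t1) (toR t2)) *
  (orient (f b0) (f b1) (f b2) * orient (toR b0) (toR b1) (toR b2)) < 0 ->
  exists D, (forall a, 0 < D a) /\ moment_det D = 0.
Proof.
  intros T0 T1 T2 B0 B1 B2 Opp.
  set (pt := orient (f t0) (f t1) (f t2) * orient (toR t0) (toR t1) (toR t2)) in *.
  set (pb := orient (f b0) (f b1) (f b2) * orient (toR b0) (toR b1) (toR b2)) in *.
  assert (Npt : pt <> 0) by (intro E; rewrite E in Opp; lra).
  assert (Npb : pb <> 0) by (intro E; rewrite E in Opp; lra).
  destruct (positive_moment_sign t0 t1 t2 T0 T1 T2 Npt) as [D1 [HD1 S1]].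
  destruct (positive_moment_sign b0 b1 b2 B0 B1 B2 Npb) as [D2 [HD2 S2]].
  fold pt in S1. fold pb in S2.
  set (Phi := fun t => moment_det (fun a => D1 a + t * (D2 a - D1 a))).
  assert (P0 : Phi 0 = moment_det D1) by (apply moment_det_ext; intros; ring).
  assert (P1 : Phi 1 = moment_det D2) by (apply moment_det_ext; intros; ring).
  assert (Sg : Phi 0 * Phi 1 <= 0).
  { rewrite P0, P1. assert (0 < (moment_det D1 * pt) * (moment_det D2 * pb))
      by (apply Rmult_lt_0_compat; auto). nra. }
  destruct (IVT_cor Phi 0 1 (moment_det_affine_continuous _ _) ltac:(lra) Sg) as [t [Ht Zt]].
  exists (fun a => D1 a + t * (D2 a - D1 a)). split; [|exact Zt].
  intros a. specialize (HD1 a). specialize (HD2 a). nra.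
Qed.

(* If f is not weakly compatible, some everywhere positive D has a singular
   moment matrix: either two triangles give products of opposite signs (and
   the IVT applies on the segment between the corresponding D's), or all
   products vanish (and D = 1 works by Cauchy-Binet). *)
Lemma singular_positive_moment : ~ weakly_compatible A f ->
  exists D, (forall a, 0 < D a) /\ moment_det D = 0.
Proof.
  intros Nwc.
  destruct (classic (exists t0 t1 t2, In t0 A /\ In t1 A /\ In t2 A /\
      orient (toR t0) (toR t1) (toR t2) <> 0 /\ orient (f t0) (f t1) (f t2) <> 0))
    as [[t0 [t1 [t2 [T0 [T1 [T2 [OA Of]]]]]]]|Ng].
  - destruct (classic (exists b0 b1 b2, In b0 A /\ In b1 A /\ In b2 A /\
        orient (toR t0) (toR t1) (toR t2) * orient (toR b0) (toR b1) (toR b2) > 0 /\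
        orient (f b0) (f b1) (f b2) <> 0 /\
        ~ (orient (f t0) (f t1) (f t2) * orient (f b0) (f b1) (f b2) > 0)))
      as [[b0 [b1 [b2 [B0 [B1 [B2 [OAb [Ofb Nb]]]]]]]]|Nb].
    + apply (opposite_triangles_singular t0 t1 t2 b0 b1 b2); auto.
      assert (orient (toR b0) (toR b1) (toR b2) <> 0) by (intro E; rewrite E in OAb; lra).
      assert (orient (f t0) (f t1) (f t2) * orient (f b0) (f b1) (f b2) < 0).
      { assert (orient (f t0) (f t1) (f t2) * orient (f b0) (f b1) (f b2) <> 0)
          by (apply Rmult_integral_contrapositive; auto). lra. }
      nra.
    + exfalso. apply Nwc. exists t0, t1, t2. repeat split; auto.
      intros b0 b1 b2 B0 B1 B2 Ob Fb. apply NNPP; intro N. apply Nb.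
      exists b0, b1, b2; repeat split; auto.
  - exists (fun _ => 1). split; [intros; lra|].
    assert (E : 6 * moment_det (fun _ => 1) = 0); [|lra].
    rewrite moment_det_cauchy_binet, (S3_ext A _ (fun _ _ _ => 0)).
    + unfold S3. rewrite (sumR_ext A _ (fun _ => 0)); [apply sumR_const0|].
      intros. rewrite (sumR_ext A _ (fun _ => 0)); [apply sumR_const0|].
      intros. apply sumR_const0.
    + intros a b c Ha Hb Hc.
      destruct (Req_dec (orient (toR a) (toR b) (toR c)) 0) as [E|E]; [rewrite E; ring|].
      destruct (Req_dec (orient (f a) (f b) (f c)) 0) as [E'|E']; [rewrite E'; ring|].
      exfalso; apply Ng; exists a, b, c; auto.
Qed.

End Moments.

Section EqualValues.
Variable A : list lpt.
Variable H : list aform.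
Variable f : lpt -> pt.
Variable w : lpt -> R.
Variables x y : pt.
Hypothesis Hnd : NoDup A.
Hypothesis Hed : edge_data A H.
Hypothesis Hpoly : is_polygon A.
Hypothesis Hw : pos_weights A w.
Hypothesis Hx : in_hull A x.
Hypothesis Hy : in_hull A y.
Hypothesis Hpatch : patch A H w f x = patch A H w f y.
Hypothesis Hxy : x <> y.

Let Sx := sumR A (fun a => w a * beta H a x).
Let Sy := sumR A (fun a => w a * beta H a y).
Let Sx_pos : 0 < Sx := den_pos A H Hnd Hed w x Hw Hx.
Let Sy_pos : 0 < Sy := den_pos A H Hnd Hed w y Hw Hy.

Definition bary_x (a : lpt) : R := w a * beta H a x / Sx.
Definition bary_diff (a : lpt) : R := w a * beta H a y / Sy - bary_x a.

Lemma bary_diff_moments i : sumR A (fun a => bary_diff a * frow f i a) = 0.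
Proof.
  unfold patch in Hpatch. injection Hpatch as E1 E2. fold Sx Sy in E1, E2.
  unfold bary_diff, bary_x, frow.
  destruct i as [|[|[|i]]].
  - rewrite (sumR_ext A _ (fun a => w a * beta H a y * / Sy - w a * beta H a x * / Sx))
      by (intros; unfold Rdiv; ring).
    rewrite sumR_minus, !sumR_scal_r. fold Sx Sy. field. lra.
  - rewrite (sumR_ext A _ (fun a => (w a * fst (f a) * beta H a y) * / Sy
                                   - (w a * fst (f a) * beta H a x) * / Sx))
      by (intros; unfold Rdiv; ring).
    rewrite sumR_minus, !sumR_scal_r. unfold Rdiv in E1. rewrite E1. ring.
  - rewrite (sumR_ext A _ (fun a => (w a * snd (f a) * beta H a y) * / Sy
                                   - (w a * snd (f a) * beta H a x) * / Sx))
      by (intros; unfold Rdiv; ring).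
    rewrite sumR_minus, !sumR_scal_r. unfold Rdiv in E2. rewrite E2. ring.
  - rewrite (sumR_ext A _ (fun a => w a * beta H a y * / Sy - w a * beta H a x * / Sx))
      by (intros; unfold Rdiv; ring).
    rewrite sumR_minus, !sumR_scal_r. fold Sx Sy. field. lra.
Qed.

Definition tight (p : pt) (h : aform) : R := if Req_EM_T (hval h p) 0 then 1 else 0.
Definition face_gap (p : pt) (a : lpt) : R := sumR H (fun h => tight p h * hval h (toR a)).

Lemma face_gap_zero p a : in_face H p a -> face_gap p a = 0.
Proof.
  intros HS. unfold face_gap. rewrite (sumR_ext H _ (fun _ => 0)); [apply sumR_const0|].
  intros h Hh. unfold tight. destruct (Req_EM_T (hval h p) 0) as [E|E]; [|ring].
  rewrite hval_toR, (HS h Hh E). simpl. ring.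
Qed.

Lemma face_gap_ge1 p a : In a A -> ~ in_face H p a -> 1 <= face_gap p a.
Proof.
  intros Ha HS. unfold in_face in HS.
  apply not_all_ex_not in HS. destruct HS as [h HS].
  apply imply_to_and in HS. destruct HS as [Hh HS].
  apply imply_to_and in HS. destruct HS as [E HS].
  assert (Tnn : forall h', In h' H -> 0 <= tight p h' * hval h' (toR a)).
  { intros h' Hh'. unfold tight. destruct (Req_EM_T (hval h' p) 0);
      [rewrite Rmult_1_l; apply (hval_A_nonneg A H Hnd Hed); auto|lra]. }
  eapply Rle_trans; [|apply (sumR_in_le H _ h Tnn Hh)].
  unfold tight. destruct (Req_EM_T (hval h p) 0); [|contradiction].
  rewrite Rmult_1_l, hval_toR. apply IZR_le.
  pose proof (hvalZ_A_nonneg A H Hnd Hed h a Hh Ha). lia.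
Qed.

Definition aff0 (a : lpt) : R :=
  sumR H (fun h => log_ratio x y h * hval h (toR a)) + ln (Sx / Sy).
Definition coef (K1 K2 : R) (h : aform) : R := log_ratio x y h + K1 * tight x h - K2 * tight y h.
Definition aff (K1 K2 : R) (p : pt) : R := sumR H (fun h => coef K1 K2 h * hval h p) + ln (Sx / Sy).
Definition aff_l1 (K1 K2 : R) : R := sumR H (fun h => coef K1 K2 h * nx h).
Definition aff_l2 (K1 K2 : R) : R := sumR H (fun h => coef K1 K2 h * ny h).
Definition aff_k (K1 K2 : R) : R := sumR H (fun h => coef K1 K2 h * cz h) + ln (Sx / Sy).

Lemma aff_toR K1 K2 a : aff K1 K2 (toR a) = aff0 a + K1 * face_gap x a - K2 * face_gap y a.
Proof.
  unfold aff, aff0, face_gap, coef.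
  rewrite (sumR_ext H _ (fun h => log_ratio x y h * hval h (toR a) +
     (K1 * (tight x h * hval h (toR a)) - K2 * (tight y h * hval h (toR a)))))
     by (intros; ring).
  rewrite sumR_plus, sumR_minus, !sumR_scal. ring.
Qed.

Lemma aff_affine K1 K2 p : aff K1 K2 p = aff_l1 K1 K2 * fst p + aff_l2 K1 K2 * snd p + aff_k K1 K2.
Proof.
  unfold aff, aff_l1, aff_l2, aff_k. rewrite <- !sumR_scal_r.
  rewrite (sumR_ext H (fun h => coef K1 K2 h * hval h p)
     (fun h => coef K1 K2 h * nx h * fst p + coef K1 K2 h * ny h * snd p + coef K1 K2 h * cz h))
     by (intros; rewrite hval_eq; ring).
  rewrite !sumR_plus. ring.
Qed.

(* aff strictly increases from x to y: each edge contributes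
   coef h (h(y) - h(x)) >= 0, and not all contributions vanish as x <> y. *)
Lemma aff_increasing K1 K2 : 0 < K1 -> 0 < K2 -> aff K1 K2 x < aff K1 K2 y.
Proof.
  intros HK1 HK2.
  assert (E : aff K1 K2 y - aff K1 K2 x =
              sumR H (fun h => coef K1 K2 h * (hval h y - hval h x))).
  { unfold aff. rewrite (sumR_ext H (fun h => coef K1 K2 h * (hval h y - hval h x))
      (fun h => coef K1 K2 h * hval h y - coef K1 K2 h * hval h x)) by (intros; ring).
    rewrite sumR_minus. ring. }
  assert (T : forall h, In h H -> 0 <= coef K1 K2 h * (hval h y - hval h x) /\
            (coef K1 K2 h * (hval h y - hval h x) = 0 -> hval h x = hval h y)).
  { intros h Hh. pose proof (hval_nonneg A H Hed x h Hx Hh) as P1.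
    pose proof (hval_nonneg A H Hed y h Hy Hh) as P2.
    unfold coef, log_ratio, tight.
    destruct (Req_EM_T (hval h x) 0) as [Ex|Ex];
    destruct (Req_EM_T (hval h y) 0) as [Ey|Ey];
    destruct (Rlt_dec 0 (hval h x)); destruct (Rlt_dec 0 (hval h y)); try lra.
    - split; [nra|intros; lra].
    - split; [nra|intros Z; nra].
    - split; [nra|intros Z; nra].
    - replace (ln (hval h y / hval h x) + K1 * 0 - K2 * 0) with (ln (hval h y / hval h x))
        by ring.
      apply ln_sign_prod; lra. }
  enough (0 < aff K1 K2 y - aff K1 K2 x) by lra.
  rewrite E. destruct (Req_dec (sumR H (fun h => coef K1 K2 h * (hval h y - hval h x))) 0)
    as [Z|Z].
  - exfalso. apply Hxy. apply (hval_equal_pts A H Hnd Hed Hpoly).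
    intros h Hh. apply (T h Hh). apply (sumR_zero_nonneg H _ (fun h Hh => proj1 (T h Hh)) Z h Hh).
  - assert (0 <= sumR H (fun h => coef K1 K2 h * (hval h y - hval h x)))
      by (apply sumR_nonneg; intros; apply T; auto). lra.
Qed.

Lemma aff_nonconstant K1 K2 : 0 < K1 -> 0 < K2 ->
  aff_l1 K1 K2 <> 0 \/ aff_l2 K1 K2 <> 0 \/ aff_k K1 K2 <> 0.
Proof.
  intros P1 P2. pose proof (aff_increasing K1 K2 P1 P2) as M. rewrite !aff_affine in M.
  destruct (Req_dec (aff_l1 K1 K2) 0) as [E1|]; [|auto].
  destruct (Req_dec (aff_l2 K1 K2) 0) as [E2|]; [|auto].
  rewrite E1, E2 in M. lra.
Qed.

Lemma bary_x_pos a : In a A -> in_face H x a -> 0 < bary_x a.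
Proof.
  intros Ha S. apply Rdiv_lt_0_compat; auto.
  apply Rmult_lt_0_compat; [apply Hw; auto|apply (beta_pos A H Hed); auto].
Qed.

Lemma bary_diff_both a : In a A -> in_face H x a -> in_face H y a ->
  bary_diff a = bary_x a * (exp (aff0 a) - 1).
Proof.
  intros Ha Sxa Sya. unfold bary_diff, bary_x, aff0.
  rewrite (beta_ratio A H Hnd Hed x y a Hx Hy Ha Sxa Sya).
  rewrite exp_plus, exp_ln by (apply Rdiv_lt_0_compat; auto). field. split; lra.
Qed.

Lemma bary_diff_xonly a : In a A -> in_face H x a -> ~ in_face H y a -> bary_diff a < 0.
Proof.
  intros Ha S1 S2. pose proof (bary_x_pos a Ha S1).
  unfold bary_diff. rewrite (beta_zero A H Hnd Hed y a Ha S2). unfold Rdiv. lra.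
Qed.

Lemma bary_diff_yonly a : In a A -> ~ in_face H x a -> in_face H y a -> 0 < bary_diff a.
Proof.
  intros Ha S1 S2. unfold bary_diff, bary_x. rewrite (beta_zero A H Hnd Hed x a Ha S1).
  assert (0 < w a * beta H a y / Sy) by (apply Rdiv_lt_0_compat; auto;
     apply Rmult_lt_0_compat; [apply Hw; auto|apply (beta_pos A H Hed); auto]).
  unfold Rdiv in *. lra.
Qed.

Lemma bary_diff_none a : In a A -> ~ in_face H x a -> ~ in_face H y a -> bary_diff a = 0.
Proof.
  intros Ha S1 S2. unfold bary_diff, bary_x.
  rewrite (beta_zero A H Hnd Hed x a Ha S1), (beta_zero A H Hnd Hed y a Ha S2).
  unfold Rdiv; ring.
Qed.

Definition K0 : R := sumR A (fun a => Rabs (aff0 a)) + 1.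

Lemma K0_bound a : In a A -> Rabs (aff0 a) < K0.
Proof.
  intros Ha. unfold K0.
  pose proof (sumR_in_le A (fun a => Rabs (aff0 a)) a (fun b _ => Rabs_pos _) Ha). lra.
Qed.

Lemma K0_pos : 0 < K0.
Proof. unfold K0. pose proof (sumR_nonneg A (fun a => Rabs (aff0 a)) (fun b _ => Rabs_pos _)). lra. Qed.

Definition in_faces (a : lpt) : Prop := in_face H x a \/ in_face H y a.

Lemma bary_diff_aff_sign K1 K2 a : K0 <= K1 -> K0 <= K2 -> In a A -> in_faces a ->
  (bary_diff a = 0 /\ aff K1 K2 (toR a) = 0) \/ 0 < bary_diff a / aff K1 K2 (toR a).
Proof.
  intros HK1 HK2 Ha HS. rewrite aff_toR. pose proof (K0_bound a Ha) as Nb.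
  pose proof (Rle_abs (aff0 a)) as Ab1. pose proof (Rle_abs (- aff0 a)) as Ab2.
  rewrite Rabs_Ropp in Ab2.
  destruct (classic (in_face H x a)) as [S1|S1]; destruct (classic (in_face H y a)) as [S2|S2].
  - rewrite (face_gap_zero x a S1), (face_gap_zero y a S2).
    rewrite (bary_diff_both a Ha S1 S2). pose proof (bary_x_pos a Ha S1).
    replace (aff0 a + K1 * 0 - K2 * 0) with (aff0 a) by ring.
    destruct (Rtotal_order (aff0 a) 0) as [L|[E|L]].
    + right. assert (exp (aff0 a) < 1) by (rewrite <- exp_0; apply exp_increasing; auto).
      replace (bary_x a * (exp (aff0 a) - 1) / aff0 a) with
        ((bary_x a * (1 - exp (aff0 a))) / (- aff0 a)) by (field; lra).
      apply Rdiv_lt_0_compat; [apply Rmult_lt_0_compat|]; lra.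
    + left. rewrite E, exp_0. split; ring.
    + right. assert (1 < exp (aff0 a)) by (rewrite <- exp_0; apply exp_increasing; auto).
      apply Rdiv_lt_0_compat; [apply Rmult_lt_0_compat|]; lra.
  - rewrite (face_gap_zero x a S1). pose proof (face_gap_ge1 y a Ha S2).
    pose proof (bary_diff_xonly a Ha S1 S2). right.
    assert (aff0 a + K1 * 0 - K2 * face_gap y a < 0) by nra.
    replace (bary_diff a / (aff0 a + K1 * 0 - K2 * face_gap y a))
      with ((- bary_diff a) / (- (aff0 a + K1 * 0 - K2 * face_gap y a))) by (field; lra).
    apply Rdiv_lt_0_compat; lra.
  - rewrite (face_gap_zero y a S2). pose proof (face_gap_ge1 x a Ha S1).
    pose proof (bary_diff_yonly a Ha S1 S2). right.
    assert (0 < aff0 a + K1 * face_gap x a - K2 * 0) by nra.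
    apply Rdiv_lt_0_compat; lra.
  - destruct HS; contradiction.
Qed.

(* For a point e outside both faces, K1, K2 >= K0 can be chosen so that
   aff vanishes at e (both face gaps at e are >= 1). *)
Lemma aff_zero_at e : In e A -> ~ in_faces e ->
  exists K1 K2, K0 <= K1 /\ K0 <= K2 /\ aff K1 K2 (toR e) = 0.
Proof.
  intros He Se.
  assert (S1 : ~ in_face H x e) by (intro; apply Se; left; auto).
  assert (S2 : ~ in_face H y e) by (intro; apply Se; right; auto).
  pose proof (face_gap_ge1 x e He S1) as P. pose proof (face_gap_ge1 y e He S2) as Q.
  pose proof K0_pos.
  set (p := face_gap x e) in *. set (q := face_gap y e) in *.
  destruct (Rle_dec K0 ((K0 * q - aff0 e) / p)) as [L|L].
  - exists ((K0 * q - aff0 e) / p), K0. repeat split; try lra.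
    rewrite aff_toR. fold p q. field. lra.
  - exists K0, ((aff0 e + K0 * p) / q). repeat split; try lra.
    + apply Rnot_le_lt in L. apply (Rmult_le_reg_r q); [lra|].
      unfold Rdiv. rewrite Rmult_assoc, Rinv_l by lra.
      assert (Lt : (K0 * q - aff0 e) / p * p < K0 * p) by (apply Rmult_lt_compat_r; lra).
      replace ((K0 * q - aff0 e) / p * p) with (K0 * q - aff0 e) in Lt by (field; lra). lra.
    + rewrite aff_toR. fold p q. field. lra.
Qed.

Lemma bary_diff_factor K1 K2 e : K0 <= K1 -> K0 <= K2 -> (~ in_faces e -> aff K1 K2 (toR e) = 0) ->
  exists D, forall a, In a A -> 0 <= D a /\ bary_diff a = D a * aff K1 K2 (toR a) /\
               (in_faces a \/ a = e -> 0 < D a).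
Proof.
  intros HK1 HK2 He.
  exists (fun a => if excluded_middle_informative (in_faces a) then
                     (if Req_EM_T (aff K1 K2 (toR a)) 0 then 1 else bary_diff a / aff K1 K2 (toR a))
                   else if lpt_eq_dec a e then 1 else 0).
  intros a Ha. destruct (excluded_middle_informative (in_faces a)) as [S|S].
  - destruct (bary_diff_aff_sign K1 K2 a HK1 HK2 Ha S) as [[Z1 Z2]|P].
    + destruct (Req_EM_T (aff K1 K2 (toR a)) 0); [|contradiction]. rewrite Z1, Z2.
      repeat split; lra.
    + destruct (Req_EM_T (aff K1 K2 (toR a)) 0) as [E|E].
      * rewrite E in P. unfold Rdiv in P. rewrite Rinv_0, Rmult_0_r in P. lra.
      * repeat split; try lra. field. auto.
  - assert (Z : bary_diff a = 0).
    { apply bary_diff_none; auto; intro; apply S; [left|right]; auto. }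
    destruct (lpt_eq_dec a e) as [E|E].
    + subst a. rewrite Z, He by auto. repeat split; lra.
    + rewrite Z. repeat split; try lra. intros [S'|S']; contradiction.
Qed.

Hypothesis Hwc : weakly_compatible A f.

(* Every triangle of points in the faces of x or y, together possibly with
   one further point e, is degenerate in A or in its image: bary_diff = D aff
   exhibits the coefficients of aff as a kernel vector of M_D. *)
Lemma face_triangles_degenerate (e : lpt) : In e A ->
  forall a b c, In a A -> In b A -> In c A ->
    (in_faces a \/ a = e) -> (in_faces b \/ b = e) -> (in_faces c \/ c = e) ->
    orient (f a) (f b) (f c) * orient (toR a) (toR b) (toR c) = 0.
Proof.
  intros He a b c Ha Hb Hc Ca Cb Cc.
  assert (HK : exists K1 K2, K0 <= K1 /\ K0 <= K2 /\ (~ in_faces e -> aff K1 K2 (toR e) = 0)).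
  { destruct (classic (in_faces e)) as [Se|Se].
    - exists K0, K0. repeat split; try lra. intros; contradiction.
    - destruct (aff_zero_at e He Se) as [K1 [K2 [? [? ?]]]]. exists K1, K2. auto. }
  destruct HK as [K1 [K2 [HK1 [HK2 HKe]]]]. pose proof K0_pos.
  destruct (bary_diff_factor K1 K2 e HK1 HK2 HKe) as [D HD].
  apply (moment_det_zero_degenerate A f D Hwc); try (intros; apply HD; auto); auto.
  apply (moment_kernel_det_zero A f D (aff_l1 K1 K2) (aff_l2 K1 K2) (aff_k K1 K2)).
  - apply aff_nonconstant; lra.
  - intros i. rewrite <- (bary_diff_moments i). apply sumR_ext. intros t Ht.
    destruct (HD t Ht) as [_ [E _]]. rewrite E, aff_affine. unfold toR; simpl. ring.
Qed.

End EqualValues.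

Definition degenerate (f : lpt -> pt) (a b c : lpt) : Prop :=
  orient (f a) (f b) (f c) * orient (toR a) (toR b) (toR c) = 0.

Lemma degenerate_image (f : lpt -> pt) a b c :
  orient (toR a) (toR b) (toR c) <> 0 -> degenerate f a b c -> orient (f a) (f b) (f c) = 0.
Proof. intros N D. apply Rmult_integral in D. destruct D; [auto|contradiction]. Qed.

Section FaceArgument.
Variable A : list lpt.
Variable H : list aform.
Variable f : lpt -> pt.
Hypothesis Hnd : NoDup A.
Hypothesis Hed : edge_data A H.

Lemma collinear_img (P Q c r : lpt) : f P <> f Q ->
  orient (toR P) (toR Q) (toR r) <> 0 ->
  degenerate f P Q c -> degenerate f P Q r -> degenerate f P c r -> degenerate f Q c r ->
  orient (f P) (f Q) (f c) = 0.
Proof.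
  intros NF Or Bc Br Bcr Bqcr.
  assert (Fr : orient (f P) (f Q) (f r) = 0) by (apply degenerate_image; auto).
  destruct (Req_dec (orient (toR P) (toR Q) (toR c)) 0) as [Oc|Oc].
  2:{ apply degenerate_image; auto. }
  destruct (lpt_eq_dec c P) as [E|NP]; [subst; unfold orient; ring|].
  destruct (lpt_eq_dec c Q) as [E|NQ]; [subst; unfold orient; ring|].
  (* c lies on the line PQ, so Pcr and Qcr are nondegenerate in A *)
  assert (O1 : orient (toR P) (toR c) (toR r) <> 0).
  { apply line_nondeg with (toR Q); auto. intro E; apply NP; apply toR_inj; auto. }
  assert (O2 : orient (toR Q) (toR c) (toR r) <> 0).
  { apply line_nondeg with (toR P); auto.
    - rewrite orient_swap. intro E; apply Or; lra.
    - rewrite orient_swap, Oc; ring.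
    - intro E; apply NQ; apply toR_inj; auto. }
  pose proof (degenerate_image f _ _ _ O1 Bcr) as F1.
  pose proof (degenerate_image f _ _ _ O2 Bqcr) as F2.
  destruct (classic (f r = f P)) as [E|E].
  - enough (E' : orient (f Q) (f P) (f c) = 0) by (rewrite orient_swap in E'; lra).
    apply line_trans with (f r); auto.
    + rewrite orient_swap, Fr; ring.
    + rewrite E; auto.
  - apply line_trans with (f r); auto.
Qed.

(* The situation of the face argument: SU is a set of points of A (the
   union of the faces of x and y) such that triangles inside SU, or inside
   SU plus one outside point, are degenerate. *)
Variable SU : lpt -> Prop.
Hypothesis C1 : forall a b c, In a A -> In b A -> In c A -> SU a -> SU b -> SU c ->
  degenerate f a b c.
Hypothesis C2 : forall e, In e A -> ~ SU e -> forall a b c, In a A -> In b A -> In c A ->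
  (SU a \/ a = e) -> (SU b \/ b = e) -> (SU c \/ c = e) -> degenerate f a b c.

Lemma images_collinear P Q : In P A -> In Q A -> SU P -> SU Q -> f P <> f Q ->
  (exists r, In r A /\ orient (toR P) (toR Q) (toR r) <> 0) ->
  (forall c, In c A -> orient (toR P) (toR Q) (toR c) = 0 -> SU c) ->
  forall c, In c A -> orient (f P) (f Q) (f c) = 0.
Proof.
  intros HP HQ SP SQ NF [r0 [Hr0 Or0]] Line c Hc.
  destruct (classic (exists r, In r A /\ SU r /\ orient (toR P) (toR Q) (toR r) <> 0))
    as [[r [Hr [Sr Or]]]|Nr].
  - destruct (classic (SU c)) as [Sc|Sc].
    + apply collinear_img with r; auto; apply C1; auto.
    + apply collinear_img with r; auto; apply (C2 c Hc Sc); auto.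
  - (* no point of SU off the line: r0 is outside SU *)
    assert (Sr0 : ~ SU r0) by (intro S; apply Nr; eauto).
    destruct (classic (SU c)) as [Sc|Sc].
    + apply collinear_img with r0; auto; apply (C2 r0 Hr0 Sr0); auto.
    + assert (Oc : orient (toR P) (toR Q) (toR c) <> 0) by (intro Oc; apply Sc, Line; auto).
      apply (degenerate_image f _ _ _ Oc).
      apply (C2 c Hc Sc P Q c); auto.
Qed.

Hypothesis Hcomp : compatible A f.

(* A point q whose face contains two distinct points of A (and lies in SU)
   is impossible: its face then lies in an edge line, whose two extreme
   points P, Q are vertices with f P <> f Q, and images_collinear would make
   every image triangle degenerate. *)
Lemma face_edge_contradiction (q : pt) :
  in_hull A q -> (forall a, in_face H q a -> SU a) ->
  (exists P0 Q0, In P0 A /\ In Q0 A /\ P0 <> Q0 /\ in_face H q P0 /\ in_face H q Q0) ->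
  False.
Proof.
  intros Hq HSU [P0 [Q0 [HP0 [HQ0 [NPQ0 [SP0 SQ0]]]]]].
  destruct Hcomp as [[t0 [t1 [t2 [T0 [T1 [T2 [OA [Of _]]]]]]]] Hvert].
  destruct (classic (exists h, In h H /\ hval h q = 0)) as [[h [Hh Hhq]]|Nh].
  2:{ (* q is interior: SU is all of A *)
      assert (All : forall a, SU a).
      { intros a. apply HSU. intros h Hh E. exfalso; apply Nh; exists h; auto. }
      apply Of, (degenerate_image f _ _ _ OA), C1; auto. }
  destruct (argmin_ex A (in_face H q) (fun b => tangent_coord h (toR b))) as [P [HP [SP Pmin]]].
  { exists P0; auto. }
  destruct (argmin_ex A (in_face H q) (fun b => -1 * tangent_coord h (toR b)))
    as [Q [HQ [SQ Qmin]]].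
  { exists P0; auto. }
  assert (NPQ : P <> Q).
  { intro E. subst Q. apply NPQ0. apply toR_inj. apply (line_eq A H Hed h); auto.
    - rewrite hval_toR, (SP0 h Hh Hhq). reflexivity.
    - rewrite hval_toR, (SQ0 h Hh Hhq). reflexivity.
    - pose proof (Pmin P0 HP0 SP0). pose proof (Pmin Q0 HQ0 SQ0).
      pose proof (Qmin P0 HP0 SP0). pose proof (Qmin Q0 HQ0 SQ0). lra. }
  assert (VP : is_vertex A P).
  { apply (extreme_vertex A H Hnd Hed q h 1 P Hh Hhq); auto; try lra.
    intros b Hb Sb. specialize (Pmin b Hb Sb). lra. }
  assert (VQ : is_vertex A Q) by (apply (extreme_vertex A H Hnd Hed q h (-1) Q Hh Hhq); auto; lra).
  assert (NPQr : toR P <> toR Q) by (intro E; apply NPQ, toR_inj; auto).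
  assert (Off : exists r, In r A /\ orient (toR P) (toR Q) (toR r) <> 0).
  { apply NNPP; intro N. apply OA. apply (collinear3 (toR P) (toR Q)); auto;
      apply NNPP; intro N'; apply N; eauto. }
  assert (Line : forall c, In c A -> orient (toR P) (toR Q) (toR c) = 0 -> SU c).
  { (* points of the line PQ lie on every edge line through q *)
    intros c Hc Oc. apply HSU. intros h' Hh' E.
    apply eq_IZR. rewrite <- hval_toR.
    apply (hval_line h' (toR P) (toR Q)); auto.
    - rewrite hval_toR, (SP h' Hh' E); reflexivity.
    - rewrite hval_toR, (SQ h' Hh' E); reflexivity. }
  assert (NF : f P <> f Q) by (apply Hvert; auto).
  pose proof (images_collinear P Q HP HQ (HSU P SP) (HSU Q SQ) NF Off Line) as OnL.
  apply Of. apply (collinear3 (f P) (f Q)); auto.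
Qed.

End FaceArgument.

(* If F_w(x) = F_w(y)
   with x <> y, the face argument rules out faces with two points, so x and
   y are vertices with F_w(x) = f x and F_w(y) = f y, contradicting
   compatibility. *)
Lemma compatible_injective (A : list lpt) (H : list aform) (f : lpt -> pt) :
  NoDup A -> is_polygon A -> edge_data A H -> compatible A f ->
  forall w, pos_weights A w -> injective_on_hull A (patch A H w f).
Proof.
  intros Hnd Hpoly Hed Hcomp w Hw x y Hx Hy Hp. apply NNPP; intro Hxy.
  pose proof (face_triangles_degenerate A H f w x y Hnd Hed Hpoly Hw Hx Hy Hp Hxy (proj1 Hcomp))
    as MB.
  set (SU := in_faces H x y).
  assert (C1 : forall a b c, In a A -> In b A -> In c A -> SU a -> SU b -> SU c ->
                 degenerate f a b c) by (intros; apply (MB a); auto).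
  assert (C2 : forall e, In e A -> ~ SU e -> forall a b c, In a A -> In b A -> In c A ->
     (SU a \/ a = e) -> (SU b \/ b = e) -> (SU c \/ c = e) -> degenerate f a b c)
    by (intros; apply (MB e); auto).
  assert (Single : forall q, in_hull A q -> (forall a, in_face H q a -> SU a) ->
            exists v, In v A /\ in_face H q v /\ forall b, In b A -> in_face H q b -> b = v).
  { intros q Hq Hsub. destruct (in_face_exists A H Hnd Hed q Hq) as [v [Hv Sv]].
    exists v. repeat split; auto. intros b Hb Sb. apply NNPP; intro N.
    apply (face_edge_contradiction A H f Hnd Hed SU C1 C2 Hcomp q Hq Hsub).
    exists b, v. auto. }
  destruct (Single x Hx (fun a S => or_introl S)) as [vx [Hvx [Svx Ux]]].
  destruct (Single y Hy (fun a S => or_intror S)) as [vy [Hvy [Svy Uy]]].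
  rewrite (patch_isolated A H Hnd Hed f w x vx Hw Hx Hvx Svx Ux),
          (patch_isolated A H Hnd Hed f w y vy Hw Hy Hvy Svy Uy) in Hp.
  assert (Vx : is_vertex A vx).
  { apply (isolated_vertex A H Hnd Hed vx Hvx).
    rewrite <- (isolated_point A H Hnd Hed x vx Hx Hvx Ux). auto. }
  assert (Vy : is_vertex A vy).
  { apply (isolated_vertex A H Hnd Hed vy Hvy).
    rewrite <- (isolated_point A H Hnd Hed y vy Hy Hvy Uy). auto. }
  apply (proj2 Hcomp vx vy Vx Vy); auto.
  intro E. subst vy. apply Hxy.
  rewrite (isolated_point A H Hnd Hed x vx Hx Hvx Ux), (isolated_point A H Hnd Hed y vx Hy Hvy Uy).
  reflexivity.
Qed.

(* Injective patches separate the images of distinct vertices, since the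
   patch interpolates f at the vertices. *)
Lemma injective_vertices_distinct (A : list lpt) (H : list aform) (f : lpt -> pt) :
  NoDup A -> edge_data A H ->
  (forall w, pos_weights A w -> injective_on_hull A (patch A H w f)) ->
  forall v1 v2, is_vertex A v1 -> is_vertex A v2 -> v1 <> v2 -> f v1 <> f v2.
Proof.
  intros Hnd Hed Hinj v1 v2 V1 V2 Ne E.
  assert (Hw : pos_weights A (fun _ => 1)) by (intros a _; lra).
  apply Ne, toR_inj. apply (Hinj _ Hw); try apply (in_hull_pt A Hnd); try apply V1; try apply V2.
  rewrite !(patch_vertex A H Hnd Hed f); auto.
Qed.

Lemma sumR_continuous {T} (l : list T) (F : T -> R -> R) s :
  (forall t, In t l -> continuity_pt (F t) s) ->
  continuity_pt (fun s => sumR l (fun t => F t s)) s.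
Proof.
  induction l as [|x l IH]; simpl; intros C.
  - apply continuity_pt_const. intros a b; auto.
  - apply (continuity_pt_ext (plus_fct (F x) (fun s => sumR l (fun t => F t s)))).
    + intros; reflexivity.
    + apply continuity_pt_plus; auto.
Qed.

Lemma ln_continuous_comp (g : R -> R) (x : R) :
  0 < g x -> continuity_pt g x -> continuity_pt (fun s => ln (g s)) x.
Proof.
  intros. apply continuity_pt_comp with (f1 := g) (f2 := ln); auto.
  apply derivable_continuous_pt. exists (/ g x). apply derivable_pt_lim_ln; auto.
Qed.

Lemma abs_bound_coef (s a b : R) : 0 <= s <= 1 ->
  Rabs ((1 - 2 * s) * a + 4 * s * (1 - s) * b) <= Rabs a + Rabs b.
Proof.
  intros Hs. eapply Rle_trans; [apply Rabs_triang|].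
  rewrite !Rabs_mult.
  assert (Rabs (1 - 2 * s) <= 1) by (apply Rabs_le; lra).
  assert (Rabs (4 * s * (1 - s)) <= 1).
  { rewrite Rabs_right by nra. pose proof (Rle_0_sqr (2*s-1)) as Sq; unfold Rsqr in Sq; nra. }
  assert (E4 : Rabs (4 * s * (1 - s)) = Rabs 4 * Rabs s * Rabs (1 - s)) by (rewrite !Rabs_mult; ring).
  pose proof (Rabs_pos a). pose proof (Rabs_pos b). pose proof (Rabs_pos (1 - 2 * s)).
  rewrite <- E4. pose proof (Rabs_pos (4 * s * (1 - s))). nra.
Qed.

(* The log-gradient of the Bernstein ratio between two interior points,
     G(x0, y) = sum_h ln(h(y)/h(x0)) (nx h, ny h),
   can be made parallel to any prescribed nonzero direction (l1, l2), with
   y <> x0.  Moving y along a small arc around x0 whose direction turns from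
   (-l2, l1) through (l1, l2) to (l2, -l1), the monotonicity
   <y - x0, G(x0, y)> > 0 makes the cross product of (l1, l2) with G change
   sign, and the IVT gives a point where G is parallel to (l1, l2). *)
Section LogGradient.
Variable A : list lpt.
Variable H : list aform.
Hypothesis Hnd : NoDup A.
Hypothesis Hed : edge_data A H.
Hypothesis Hpoly : is_polygon A.

Definition log_grad1 (x0 y : pt) : R := sumR H (fun h => ln (hval h y / hval h x0) * nx h).
Definition log_grad2 (x0 y : pt) : R := sumR H (fun h => ln (hval h y / hval h x0) * ny h).

(* <y - x0, G(x0, y)> = sum_h ln(h(y)/h(x0)) (h(y) - h(x0)) > 0 for y <> x0. *)
Lemma log_grad_monotone (x0 y : pt) :
  (forall h, In h H -> 0 < hval h x0) -> (forall h, In h H -> 0 < hval h y) -> y <> x0 ->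
  0 < (fst y - fst x0) * log_grad1 x0 y + (snd y - snd x0) * log_grad2 x0 y.
Proof.
  intros Px Py Nxy. unfold log_grad1, log_grad2.
  rewrite <- !sumR_scal, <- sumR_plus.
  rewrite (sumR_ext H _ (fun h => ln (hval h y / hval h x0) * (hval h y - hval h x0)))
    by (intros h _; rewrite !hval_eq; ring).
  assert (T : forall h, In h H -> 0 <= ln (hval h y / hval h x0) * (hval h y - hval h x0) /\
     (ln (hval h y / hval h x0) * (hval h y - hval h x0) = 0 -> hval h x0 = hval h y))
    by (intros; apply ln_sign_prod; auto).
  destruct (Req_dec (sumR H (fun h => ln (hval h y / hval h x0) * (hval h y - hval h x0))) 0)
    as [Z|Z].
  - exfalso. apply Nxy. symmetry. apply (hval_equal_pts A H Hnd Hed Hpoly).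
    intros h Hh. apply (T h Hh). apply (sumR_zero_nonneg H _ (fun h Hh => proj1 (T h Hh)) Z h Hh).
  - assert (0 <= sumR H (fun h => ln (hval h y / hval h x0) * (hval h y - hval h x0)))
      by (apply sumR_nonneg; intros; apply T; auto). lra.
Qed.

Variable x0 : pt.
Hypothesis Hx0 : forall h, In h H -> 1/3 <= hval h x0.
Variables l1 l2 : R.
Hypothesis Nl : ~ (l1 = 0 /\ l2 = 0).

Lemma l_norm_pos : 0 < l1 * l1 + l2 * l2.
Proof.
  destruct (Req_dec l1 0) as [E1|E1]; [destruct (Req_dec l2 0) as [E2|E2]; [exfalso; auto|]|].
  - assert (0 < l2 * l2) by (apply Rsqr_pos_lt; auto). nra.
  - assert (0 < l1 * l1) by (apply Rsqr_pos_lt; auto). nra.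
Qed.

(* The arc  s |-> x0 + rho ((1 - 2s) (-l2, l1) + 4 s (1 - s) (l1, l2)),  with
   rho small enough that the arc stays where every edge form is >= 1/6. *)
Definition arc_rho : R :=
  1 / (6 * (1 + sumR H (fun h => Rabs (nx h) + Rabs (ny h))) * (1 + (Rabs l1 + Rabs l2))).
Definition arc_dx (s : R) : R := arc_rho * ((1 - 2 * s) * (- l2) + 4 * s * (1 - s) * l1).
Definition arc_dy (s : R) : R := arc_rho * ((1 - 2 * s) * l1 + 4 * s * (1 - s) * l2).
Definition arc (s : R) : pt := (fst x0 + arc_dx s, snd x0 + arc_dy s).

Lemma arc_rho_pos : 0 < arc_rho.
Proof.
  unfold arc_rho. pose proof (Rabs_pos l1). pose proof (Rabs_pos l2).
  assert (0 <= sumR H (fun h => Rabs (nx h) + Rabs (ny h)))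
    by (apply sumR_nonneg; intros; pose proof (Rabs_pos (nx a)); pose proof (Rabs_pos (ny a)); lra).
  apply Rdiv_lt_0_compat; [lra|]. apply Rmult_lt_0_compat; [|lra]. lra.
Qed.

Lemma arc_inside s h : 0 <= s <= 1 -> In h H -> 1/6 <= hval h (arc s).
Proof.
  intros Hs Hh.
  set (NB := sumR H (fun h => Rabs (nx h) + Rabs (ny h))).
  set (LB := Rabs l1 + Rabs l2).
  assert (NB0 : 0 <= NB)
    by (apply sumR_nonneg; intros; pose proof (Rabs_pos (nx a)); pose proof (Rabs_pos (ny a)); lra).
  assert (LB0 : 0 <= LB) by (unfold LB; pose proof (Rabs_pos l1); pose proof (Rabs_pos l2); lra).
  pose proof arc_rho_pos as Rho.
  assert (RhoB : NB * (arc_rho * LB) <= 1 / 6).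
  { unfold arc_rho. fold NB LB.
    replace (NB * (1 / (6 * (1 + NB) * (1 + LB)) * LB)) with
      ((NB * LB) / (6 * (1 + NB) * (1 + LB))) by (field; lra).
    apply (Rmult_le_reg_r (6 * (1 + NB) * (1 + LB))); [apply Rmult_lt_0_compat; lra|].
    unfold Rdiv. rewrite Rmult_assoc, Rinv_l by (apply Rgt_not_eq; apply Rmult_lt_0_compat; lra).
    nra. }
  assert (E : hval h (arc s) = hval h x0 + (nx h * arc_dx s + ny h * arc_dy s))
    by (unfold arc; rewrite !hval_eq; simpl; ring).
  rewrite E.
  assert (B1 : Rabs (arc_dx s) <= arc_rho * LB).
  { unfold arc_dx. rewrite Rabs_mult, (Rabs_right arc_rho) by lra.
    apply Rmult_le_compat_l; [lra|].
    unfold LB. rewrite (Rplus_comm (Rabs l1)), <- (Rabs_Ropp l2). apply abs_bound_coef; auto. }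
  assert (B2 : Rabs (arc_dy s) <= arc_rho * LB).
  { unfold arc_dy. rewrite Rabs_mult, (Rabs_right arc_rho) by lra.
    apply Rmult_le_compat_l; [lra|]. apply abs_bound_coef; auto. }
  assert (Bh : Rabs (nx h) + Rabs (ny h) <= NB).
  { apply (sumR_in_le H (fun h => Rabs (nx h) + Rabs (ny h)) h); auto.
    intros; pose proof (Rabs_pos (nx a)); pose proof (Rabs_pos (ny a)); lra. }
  assert (Bs : Rabs (nx h * arc_dx s + ny h * arc_dy s) <= NB * (arc_rho * LB)).
  { eapply Rle_trans; [apply Rabs_triang|]. rewrite !Rabs_mult.
    pose proof (Rabs_pos (nx h)). pose proof (Rabs_pos (ny h)).
    pose proof (Rabs_pos (arc_dx s)). pose proof (Rabs_pos (arc_dy s)).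
    assert (Rabs (nx h) * Rabs (arc_dx s) <= Rabs (nx h) * (arc_rho * LB))
      by (apply Rmult_le_compat_l; auto).
    assert (Rabs (ny h) * Rabs (arc_dy s) <= Rabs (ny h) * (arc_rho * LB))
      by (apply Rmult_le_compat_l; auto).
    assert (0 <= arc_rho * LB) by nra. nra. }
  specialize (Hx0 h Hh). pose proof (Rle_abs (- (nx h * arc_dx s + ny h * arc_dy s))) as Ab.
  rewrite Rabs_Ropp in Ab. lra.
Qed.

(* The arc never returns to x0: its direction vector is a nonzero
   combination of the orthogonal vectors (-l2, l1) and (l1, l2). *)
Lemma arc_moves s : 0 <= s <= 1 -> arc s <> x0.
Proof.
  intros Hs E. pose proof arc_rho_pos as Rho.
  pose proof l_norm_pos as Ll.
  assert (E1 : arc_dx s = 0) by (assert (F := f_equal fst E); unfold arc in F; simpl in F; lra).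
  assert (E2 : arc_dy s = 0) by (assert (F := f_equal snd E); unfold arc in F; simpl in F; lra).
  unfold arc_dx, arc_dy in E1, E2.
  set (u := 1 - 2 * s) in *. set (v := 4 * s * (1 - s)) in *.
  assert (D1 : u * (- l2) + v * l1 = 0) by (apply (Rmult_eq_reg_l arc_rho); lra).
  assert (D2 : u * l1 + v * l2 = 0) by (apply (Rmult_eq_reg_l arc_rho); lra).
  assert (Q1 : u * (l1 * l1 + l2 * l2) = 0).
  { transitivity (- l2 * (u * (- l2) + v * l1) + l1 * (u * l1 + v * l2)); [ring|].
    rewrite D1, D2. ring. }
  assert (Q2 : v * (l1 * l1 + l2 * l2) = 0).
  { transitivity (l1 * (u * (- l2) + v * l1) + l2 * (u * l1 + v * l2)); [ring|].
    rewrite D1, D2. ring. }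
  apply Rmult_integral in Q1. apply Rmult_integral in Q2.
  destruct Q1 as [Q1|Q1]; [|lra]. destruct Q2 as [Q2|Q2]; [|lra].
  unfold u, v in *. assert (s = 1/2) by lra. subst. lra.
Qed.

Definition arc_cross (s : R) : R := l1 * log_grad2 x0 (arc s) - l2 * log_grad1 x0 (arc s).

Lemma arc_cross_continuous s : 0 <= s <= 1 -> continuity_pt arc_cross s.
Proof.
  intros Hs.
  assert (Px0 : forall h, In h H -> 0 < hval h x0) by (intros h Hh; specialize (Hx0 h Hh); lra).
  assert (CG : forall (k : aform -> R),
      continuity_pt (fun s => sumR H (fun h => ln (hval h (arc s) / hval h x0) * k h)) s).
  { intros k. apply (sumR_continuous H (fun h s => ln (hval h (arc s) / hval h x0) * k h)).
    intros h Hh.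
    apply (continuity_pt_ext (mult_fct (fun s => ln (hval h (arc s) / hval h x0)) (fct_cte (k h))));
      [intros; reflexivity|].
    apply continuity_pt_mult; [|apply continuity_pt_const; intros u v; reflexivity].
    apply ln_continuous_comp.
    - apply Rdiv_lt_0_compat; [pose proof (arc_inside s h Hs Hh); lra|auto].
    - apply (continuity_pt_ext (fun s => (nx h * (fst x0 + arc_dx s) + ny h * (snd x0 + arc_dy s)
                                          + cz h) / hval h x0)).
      + intros u; unfold arc; rewrite (hval_eq h (fst x0 + arc_dx u, snd x0 + arc_dy u)); reflexivity.
      + unfold arc_dx, arc_dy. specialize (Px0 h Hh). reg. }
  apply (continuity_pt_ext (minus_fct (mult_real_fct l1 (fun s => log_grad2 x0 (arc s)))
                                      (mult_real_fct l2 (fun s => log_grad1 x0 (arc s)))));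
    [intros; reflexivity|].
  apply continuity_pt_minus; apply continuity_pt_scal; apply CG.
Qed.

(* At the ends of the arc the direction is +-(-l2, l1), so monotonicity
   gives arc_cross 0 > 0 > arc_cross 1. *)
Lemma arc_cross_ends : 0 < arc_cross 0 /\ arc_cross 1 < 0.
Proof.
  assert (Px0 : forall h, In h H -> 0 < hval h x0) by (intros h Hh; specialize (Hx0 h Hh); lra).
  assert (Mono : forall s, 0 <= s <= 1 ->
            0 < arc_dx s * log_grad1 x0 (arc s) + arc_dy s * log_grad2 x0 (arc s)).
  { intros s Hs. pose proof (log_grad_monotone x0 (arc s) Px0) as M.
    replace (arc_dx s) with (fst (arc s) - fst x0) by (unfold arc; simpl; ring).
    replace (arc_dy s) with (snd (arc s) - snd x0) by (unfold arc; simpl; ring).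
    apply M; [|apply arc_moves; auto].
    intros h Hh; pose proof (arc_inside s h Hs Hh); lra. }
  pose proof arc_rho_pos. unfold arc_cross.
  pose proof (Mono 0 ltac:(lra)) as M0. pose proof (Mono 1 ltac:(lra)) as M1.
  unfold arc_dx, arc_dy in M0, M1.
  replace (arc_rho * ((1 - 2 * 0) * - l2 + 4 * 0 * (1 - 0) * l1) * log_grad1 x0 (arc 0) +
           arc_rho * ((1 - 2 * 0) * l1 + 4 * 0 * (1 - 0) * l2) * log_grad2 x0 (arc 0)) with
    (arc_rho * (l1 * log_grad2 x0 (arc 0) - l2 * log_grad1 x0 (arc 0))) in M0 by ring.
  replace (arc_rho * ((1 - 2 * 1) * - l2 + 4 * 1 * (1 - 1) * l1) * log_grad1 x0 (arc 1) +
           arc_rho * ((1 - 2 * 1) * l1 + 4 * 1 * (1 - 1) * l2) * log_grad2 x0 (arc 1)) with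
    (- (arc_rho * (l1 * log_grad2 x0 (arc 1) - l2 * log_grad1 x0 (arc 1)))) in M1 by ring.
  split; nra.
Qed.

Lemma log_gradient_realized :
  exists y0 mu, y0 <> x0 /\ (forall h, In h H -> 0 < hval h y0) /\
    log_grad1 x0 y0 = mu * l1 /\ log_grad2 x0 y0 = mu * l2.
Proof.
  destruct arc_cross_ends as [C0 C1].
  destruct (Ranalysis5.IVT_interv (fun s => - arc_cross s) 0 1
      (fun s Hs => continuity_pt_opp _ _ (arc_cross_continuous s Hs)) ltac:(lra) ltac:(lra) ltac:(lra))
    as [s [Hs Zs]].
  pose proof l_norm_pos as Ll.
  set (G1 := log_grad1 x0 (arc s)). set (G2 := log_grad2 x0 (arc s)).
  assert (K : l1 * G2 = l2 * G1) by (unfold arc_cross in Zs; fold G1 G2 in Zs; lra).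
  set (mu := (l1 * G1 + l2 * G2) / (l1 * l1 + l2 * l2)).
  assert (E1 : G1 = mu * l1).
  { unfold mu. apply (Rmult_eq_reg_r (l1 * l1 + l2 * l2)); [|lra].
    replace ((l1 * G1 + l2 * G2) / (l1 * l1 + l2 * l2) * l1 * (l1 * l1 + l2 * l2))
      with ((l1 * G1 + l2 * G2) * l1) by (field; lra).
    transitivity (l1 * l1 * G1 + l2 * (l2 * G1)); [ring|rewrite <- K; ring]. }
  assert (E2 : G2 = mu * l2).
  { unfold mu. apply (Rmult_eq_reg_r (l1 * l1 + l2 * l2)); [|lra].
    replace ((l1 * G1 + l2 * G2) / (l1 * l1 + l2 * l2) * l2 * (l1 * l1 + l2 * l2))
      with ((l1 * G1 + l2 * G2) * l2) by (field; lra).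
    transitivity (l1 * (l1 * G2) + l2 * l2 * G2); [ring|rewrite K; ring]. }
  exists (arc s), mu. repeat split; auto.
  - apply arc_moves; auto.
  - intros h Hh. pose proof (arc_inside s h Hs Hh). lra.
Qed.

End LogGradient.

Section Reweighting.
Variable A : list lpt.
Variable H : list aform.
Variable f : lpt -> pt.
Hypothesis Hnd : NoDup A.
Hypothesis Hed : edge_data A H.

Lemma beta_ratio_interior x0 y0 a :
  (forall h, In h H -> 0 < hval h x0) -> (forall h, In h H -> 0 < hval h y0) -> In a A ->
  beta H a y0 = beta H a x0 * exp (IZR (fst a) * log_grad1 H x0 y0 +
    IZR (snd a) * log_grad2 H x0 y0 + sumR H (fun h => ln (hval h y0 / hval h x0) * cz h)).
Proof.
  intros Px Py Ha.
  assert (Interior : forall p, (forall h, In h H -> 0 < hval h p) ->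
            in_hull A p /\ forall b, in_face H p b).
  { intros p Pp. split; [apply (ed_hull A H Hed); intros h Hh; left; auto|].
    intros b h Hh E. specialize (Pp h Hh). lra. }
  destruct (Interior x0 Px) as [Hx Sx]. destruct (Interior y0 Py) as [Hy Sy].
  rewrite (beta_ratio A H Hnd Hed x0 y0 a Hx Hy Ha (Sx a) (Sy a)). f_equal. f_equal.
  unfold log_grad1, log_grad2. rewrite <- !sumR_scal, <- !sumR_plus. apply sumR_ext.
  intros h Hh. unfold log_ratio.
  destruct (Rlt_dec 0 (hval h x0)); [|specialize (Px h Hh); lra].
  destruct (Rlt_dec 0 (hval h y0)); [|specialize (Py h Hh); lra].
  rewrite (hval_eq h (toR a)). unfold toR; simpl. ring.
Qed.

Lemma reweighted_patches_equal x0 y0 (u r : lpt -> R) (C : R) :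
  in_hull A x0 -> (forall a, In a A -> 0 < beta H a x0) -> 0 < C ->
  (forall a, In a A -> 0 < u a) ->
  (forall a, In a A -> beta H a y0 = C * r a * beta H a x0) ->
  (forall i, sumR A (fun a => u a * r a * frow f i a) = sumR A (fun a => u a * frow f i a)) ->
  patch A H (fun a => u a / beta H a x0) f x0 = patch A H (fun a => u a / beta H a x0) f y0.
Proof.
  intros Hx0 Bx Cp Hu By Hr.
  assert (At_x0 : forall i, sumR A (fun a => u a / beta H a x0 * frow f i a * beta H a x0) =
                            sumR A (fun a => u a * frow f i a)).
  { intros i. apply sumR_ext. intros a Ha. specialize (Bx a Ha). field. lra. }
  assert (At_y0 : forall i, sumR A (fun a => u a / beta H a x0 * frow f i a * beta H a y0) =
                            C * sumR A (fun a => u a * frow f i a)).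
  { intros i. rewrite <- Hr, <- sumR_scal. apply sumR_ext. intros a Ha.
    rewrite (By a Ha). specialize (Bx a Ha). field. lra. }
  assert (Pos : 0 < sumR A (fun a => u a * frow f 3 a)).
  { destruct Hx0 as [lam [_ [E _]]].
    destruct (sumR_nonempty A lam ltac:(lra)) as [a0 Ha0].
    apply (sumR_pos _ _ a0); unfold frow; [intros; rewrite Rmult_1_r; left; auto|auto|].
    rewrite Rmult_1_r. apply Hu; auto. }
  pose proof (At_x0 1%nat) as X1. pose proof (At_x0 2%nat) as X2. pose proof (At_x0 3%nat) as X3.
  pose proof (At_y0 1%nat) as Y1. pose proof (At_y0 2%nat) as Y2. pose proof (At_y0 3%nat) as Y3.
  unfold frow in *. unfold patch.
  rewrite (sumR_ext A (fun a => u a / beta H a x0 * beta H a x0)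
             (fun a => u a / beta H a x0 * 1 * beta H a x0)) by (intros; ring).
  rewrite (sumR_ext A (fun a => u a / beta H a x0 * beta H a y0)
             (fun a => u a / beta H a x0 * 1 * beta H a y0)) by (intros; ring).
  rewrite X1, X2, X3, Y1, Y2, Y3. f_equal; field; lra.
Qed.

End Reweighting.

(* Otherwise there is a positive
   D with singular moment matrix and a kernel vector (c1, c2, c3), where
   (c1, c2) <> 0.  Realise mu (c1, c2) as the log-gradient between an interior
   x0 and some y0, put g = mu (c1 a1 + c2 a2 + c3) and u (e^g - 1) = D g; then
   the weights u / beta(x0) give F_w(x0) = F_w(y0). *)
Lemma injective_weakly_compatible (A : list lpt) (H : list aform) (f : lpt -> pt) :
  NoDup A -> is_polygon A -> edge_data A H ->
  (forall w, pos_weights A w -> injective_on_hull A (patch A H w f)) ->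
  weakly_compatible A f.
Proof.
  intros Hnd Hpoly Hed Hinj. apply NNPP; intro Nwc.
  destruct (singular_positive_moment A f Hnd Nwc) as [D [HD Hdet]].
  destruct (moment_det_zero_kernel A f D Hdet) as [c1 [c2 [c3 [Nc Ker]]]].
  set (gc := fun a : lpt => c1 * IZR (fst a) + c2 * IZR (snd a) + c3).
  assert (Ncl : ~ (c1 = 0 /\ c2 = 0)).
  { destruct Hpoly as [a0 [_ [_ [Ha0 _]]]].
    apply (kernel_linear_part_nonzero A f D a0 c1 c2 c3); auto. }
  destruct (interior_pt A H Hnd Hed Hpoly) as [x0 [Hx0 Ix0]].
  destruct (log_gradient_realized A H Hnd Hed Hpoly x0 Ix0 c1 c2 Ncl)
    as [y0 [mu [Nxy [Py0 [L1 L2]]]]].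
  assert (Px0 : forall h, In h H -> 0 < hval h x0) by (intros h Hh; specialize (Ix0 h Hh); lra).
  set (g := fun a => mu * gc a).
  set (u := fun a => exp_weight (D a) (g a)).
  set (C := exp (sumR H (fun h => ln (hval h y0 / hval h x0) * cz h) - mu * c3)).
  apply Nxy. symmetry.
  apply (Hinj (fun a => u a / beta H a x0)); auto.
  - intros a Ha. apply Rdiv_lt_0_compat; [apply exp_weight_spec; auto|].
    apply (beta_pos A H Hed); auto. intros h Hh E. specialize (Px0 h Hh). lra.
  - apply (ed_hull A H Hed). intros h Hh. left; auto.
  - apply (reweighted_patches_equal A H f x0 y0 u (fun a => exp (g a)) C Hx0).
    + intros a Ha. apply (beta_pos A H Hed); auto. intros h Hh E. specialize (Px0 h Hh). lra.
    + apply exp_pos.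
    + intros a _. apply exp_weight_spec; auto.
    + intros a Ha. rewrite (beta_ratio_interior A H Hnd Hed x0 y0 a Px0 Py0 Ha), L1, L2.
      unfold C, g, gc. rewrite <- exp_plus, Rmult_comm. f_equal. f_equal. ring.
    + intros i. (* u e^g = u + D g, and D g has vanishing moments *)
      rewrite (sumR_ext A _ (fun a => u a * frow f i a + mu * (D a * gc a * frow f i a))).
      * rewrite sumR_plus, sumR_scal, Ker. ring.
      * intros a _. destruct (exp_weight_spec (D a) (g a) (HD a)) as [_ E].
        change (exp_weight (D a) (g a)) with (u a) in E.
        transitivity (u a * frow f i a + u a * (exp (g a) - 1) * frow f i a); [ring|].
        rewrite <- E. unfold g. ring.
Qed.

Theorem theorem2 (A : list lpt) (H : list aform) (f : lpt -> pt) :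
  NoDup A -> is_polygon A -> edge_data A H ->
  ((forall w : lpt -> R, pos_weights A w -> injective_on_hull A (patch A H w f))
   <-> compatible A f).
Proof.
  intros Hnd Hpoly Hed. split.
  - intros Hinj. split.
    + exact (injective_weakly_compatible A H f Hnd Hpoly Hed Hinj).
    + exact (injective_vertices_distinct A H f Hnd Hed Hinj).
  - intros Hcomp. exact (compatible_injective A H f Hnd Hpoly Hed Hcomp).
Qed.
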